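(* Let $0<\alpha<1$, $T>0$, $N_T$ a positive integer, $\Delta t=T/N_T$, $t_k=k\Delta t$. Let $\varepsilon>0$ and let $s_i>0,\ \omega_i>0$ ($i=1,\dots,N_{\mathrm{exp}}$) satisfy $\left|t^{-1-\alpha}-\sum_{i=1}^{N_{\mathrm{exp}}}\omega_ie^{-s_it}\right|\leq\varepsilon$ for all $t\in[\Delta t,T]$. Let $1\leq n\leq N_T$, let $u\in C^2[0,t_n]$ and set $u^k=u(t_k)$. Then $$\left|{}_0^C D_t^\alpha u(t)\big|_{t=t_n}-{}^{FC}_{0}\mathbb{D}_t^\alpha u^n\right|\leq\frac{\Delta t^{2-\alpha}}{\Gamma(2-\alpha)}\left(\frac{1-\alpha}{12}+\frac{2^{2-\alpha}}{2-\alpha}-(1+2^{-\alpha})\right)\max_{0\leq t\leq t_n}|u''(t)|+\frac{\alpha\varepsilon\, t_{n-1}}{\Gamma(1-\alpha)}\max_{0\leq t\leq t_{n-1}}|u(t)|.$$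
   Context: The Caputo derivative of order $\alpha\in(0,1)$ is ${}_0^C D_t^\alpha u(t)=\frac{1}{\Gamma(1-\alpha)}\int_0^t\frac{u'(\tau)}{(t-\tau)^\alpha}d\tau$. For values $u^0,\dots,u^{N_T}$ on the grid $t_k=k\Delta t$, let $\Pi_{1,l}u(\tau)=u^{l-1}\frac{t_l-\tau}{\Delta t}+u^l\frac{\tau-t_{l-1}}{\Delta t}$ on $[t_{l-1},t_l]$, let $U_{i}(t_n)=\sum_{l=1}^{n-1}\int_{t_{l-1}}^{t_l}e^{-s_i(t_n-\tau)}\Pi_{1,l}u(\tau)\,d\tau$ (empty sum $=0$ when $n=1$), and define the fast approximation, for $1\le n\le N_T$, $${}^{FC}_{0}\mathbb{D}_t^\alpha u^n=\frac{u^n-u^{n-1}}{\Delta t^\alpha\Gamma(2-\alpha)}+\frac{1}{\Gamma(1-\alpha)}\left[\frac{u^{n-1}}{\Delta t^\alpha}-\frac{u^0}{t_n^\alpha}-\alpha\sum_{i=1}^{N_{\mathrm{exp}}}\omega_iU_i(t_n)\right].$$ (For $n=1$ this equals $\frac{u^1-u^0}{\Delta t^\alpha\Gamma(2-\alpha)}$.) *)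

From Stdlib Require Import Reals List.
From Coquelicot Require Import Coquelicot.
Open Scope R_scope.

(* finite sum  \sum_{k=a}^{b} F k  (empty, i.e. 0, when b < a) *)
Definition sumk (a b : nat) (F : nat -> R) : R :=
  fold_right Rplus 0 (map F (seq a (S b - a))).

Definition Gamma (x : R) : R :=
  RInt_gen (fun t => Rpower t (x - 1) * exp (- t)) (at_right 0) (Rbar_locally p_infty).

Definition caputo (alpha : R) (u : R -> R) (t : R) : R :=
  / Gamma (1 - alpha) *
  RInt_gen (fun tau => Derive u tau / Rpower (t - tau) alpha) (at_point 0) (at_left t).

Definition tk (dt : R) (k : nat) : R := INR k * dt.

Definition Pi1 (dt : R) (uk : nat -> R) (l : nat) (tau : R) : R :=
  uk (l - 1)%nat * (tk dt l - tau) / dt + uk l * (tau - tk dt (l - 1)) / dt.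

Definition Ui (dt si : R) (uk : nat -> R) (n : nat) : R :=
  sumk 1 (n - 1) (fun l =>
    RInt (fun tau => exp (- si * (tk dt n - tau)) * Pi1 dt uk l tau)
         (tk dt (l - 1)) (tk dt l)).

Definition fast_caputo (alpha dt : R) (Nexp : nat) (s omega : nat -> R)
    (uk : nat -> R) (n : nat) : R :=
  (uk n - uk (n - 1)%nat) / (Rpower dt alpha * Gamma (2 - alpha)) +
  / Gamma (1 - alpha) *
    (uk (n - 1)%nat / Rpower dt alpha - uk 0%nat / Rpower (tk dt n) alpha
     - alpha * sumk 1 Nexp (fun i => omega i * Ui dt (s i) uk n)).

(* max_{a <= t <= b} |f t|  (as the least upper bound; finite for continuous f) *)
Definition max_abs (f : R -> R) (a b : R) : R :=
  real (Lub_Rbar (fun y => exists t, a <= t <= b /\ y = Rabs (f t))).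

(* The Caputo integral at [t_n] splits into the history [0, t_(n-1)] and the last cell
   [t_(n-1), t_n].  On the last cell, integrating by parts against [(t_n - t)^(1-a)] shows that
   the improper integral exists, and its deviation from the difference quotient of the scheme is
   [∫ u'' w] for a nonnegative weight [w] whose integral is explicit.  On the history, one
   integration by parts produces the boundary terms of the scheme and [a ∫ u (t_n - t)^(-1-a)];
   on each cell, replacing [u] by its linear interpolant costs the interpolation error against the
   convex kernel, and replacing the kernel by its exponential sum costs [eps max |u|].  The
   interpolation errors telescope to [dt^(2-a) / (6a)] over all cells but the last one, which is
   computed exactly, and [Gamma (2 - a) = (1 - a) Gamma (1 - a)] matches the constants. *)

From Stdlib Require Import Reals Lra Lia List Classical.
From Coquelicot Require Import Coquelicot.
Open Scope R_scope.

(* Coquelicot states these over an abstract normed module, with [plus] and [scal]; stated over [R]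
   they can be used by [rewrite] on goals written with [Rplus] and [Rmult]. *)

Lemma RInt_Chasles_R (f : R -> R) a b c :
  ex_RInt f a b -> ex_RInt f b c -> RInt f a b + RInt f b c = RInt f a c.
Proof. exact (RInt_Chasles f a b c). Qed.

Lemma RInt_plus_R (f g : R -> R) a b : ex_RInt f a b -> ex_RInt g a b ->
  RInt (fun t => f t + g t) a b = RInt f a b + RInt g a b.
Proof. exact (RInt_plus f g a b). Qed.

Lemma RInt_minus_R (f g : R -> R) a b : ex_RInt f a b -> ex_RInt g a b ->
  RInt (fun t => f t - g t) a b = RInt f a b - RInt g a b.
Proof. exact (RInt_minus f g a b). Qed.

Lemma RInt_scal_R (f : R -> R) a b c :
  ex_RInt f a b -> RInt (fun t => c * f t) a b = c * RInt f a b.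
Proof. exact (RInt_scal f a b c). Qed.

Lemma RInt_const_R a b c : RInt (fun _ => c) a b = (b - a) * c.
Proof. exact (RInt_const a b c). Qed.

Lemma RInt_point_R (f : R -> R) a : RInt f a a = 0.
Proof. exact (RInt_point a f). Qed.

Lemma ex_RInt_plus_R (f g : R -> R) a b :
  ex_RInt f a b -> ex_RInt g a b -> ex_RInt (fun t => f t + g t) a b.
Proof. exact (ex_RInt_plus f g a b). Qed.

Lemma ex_RInt_scal_R (f : R -> R) a b c : ex_RInt f a b -> ex_RInt (fun t => c * f t) a b.
Proof. exact (ex_RInt_scal f a b c). Qed.

Lemma ex_RInt_continuous_le (f : R -> R) a b :
  a <= b -> (forall t, a <= t <= b -> continuous f t) -> ex_RInt f a b.
Proof.
  intros Hab Hf. apply (ex_RInt_continuous (V := R_CompleteNormedModule)). intros t.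
  rewrite Rmin_left, Rmax_right by lra. apply Hf.
Qed.

Lemma RInt_derive_R (f df : R -> R) a b :
  (forall t, Rmin a b <= t <= Rmax a b -> is_derive f t (df t)) ->
  (forall t, Rmin a b <= t <= Rmax a b -> continuous df t) ->
  RInt df a b = f b - f a.
Proof. intros Hd Hc. apply is_RInt_unique. exact (is_RInt_derive f df a b Hd Hc). Qed.

Lemma ex_RInt_derive_R (f df : R -> R) a b :
  (forall t, Rmin a b <= t <= Rmax a b -> is_derive f t (df t)) ->
  (forall t, Rmin a b <= t <= Rmax a b -> continuous df t) ->
  ex_RInt df a b.
Proof. intros Hd Hc. eexists. exact (is_RInt_derive f df a b Hd Hc). Qed.

Lemma continuous_mult_R (f g : R -> R) x :
  continuous f x -> continuous g x -> continuous (fun t => f t * g t) x.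
Proof. exact (continuous_mult f g x). Qed.

Lemma continuous_plus_R (f g : R -> R) x :
  continuous f x -> continuous g x -> continuous (fun t => f t + g t) x.
Proof. exact (continuous_plus f g x). Qed.

Lemma continuous_minus_R (f g : R -> R) x :
  continuous f x -> continuous g x -> continuous (fun t => f t - g t) x.
Proof. exact (continuous_minus f g x). Qed.

Lemma continuous_exp_comp (f : R -> R) x : continuous f x -> continuous (fun t => exp (f t)) x.
Proof.
  intros Hf. apply (continuous_comp f exp); auto.
  apply continuity_pt_filterlim, derivable_continuous_pt, derivable_pt_exp.
Qed.

Lemma continuous_Rabs_comp (f : R -> R) x : continuous f x -> continuous (fun t => Rabs (f t)) x.
Proof. intros Hf. apply (continuous_comp f Rabs); auto. apply continuous_Rabs. Qed.

Lemma continuous_opp_R (f : R -> R) x : continuous f x -> continuous (fun t => - f t) x.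
Proof. exact (continuous_opp f x). Qed.

(* Equalities produced by Coquelicot lemmas live in a normed-module carrier that is only
   convertible to [R]; [ring] and [field] need them restated over [R]. *)
Ltac eq_R := match goal with |- @eq _ ?x ?y => change (@eq R x y) end.

Ltac continuity_R :=
  repeat match goal with
  | |- continuous (fun t => _ * _) _ => apply continuous_mult_R
  | |- continuous (fun t => _ + _) _ => apply continuous_plus_R
  | |- continuous (fun t => _ - _) _ => apply continuous_minus_R
  | |- continuous (Rminus ?c) _ => apply (continuous_minus_R (fun _ => c) (fun t => t))
  | |- continuous (Rmult ?c) _ => apply (continuous_mult_R (fun _ => c) (fun t => t))
  | |- continuous (fun t => - _) _ => apply continuous_opp_R
  | |- continuous Ropp _ => apply (continuous_opp_R (fun t => t))
  | |- continuous (fun t => exp _) _ => apply continuous_exp_comp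
  | |- continuous (fun t => t) _ => apply continuous_id
  | |- continuous (fun _ => _) _ => apply continuous_const
  end.

Lemma is_RInt_gen_of_approx (f : R -> R) (Fa Fb : (R -> Prop) -> Prop) l :
  (forall eps, 0 < eps -> exists Qa Qb, Fa Qa /\ Fb Qb /\
     forall a b, Qa a -> Qb b -> ex_RInt f a b /\ Rabs (RInt f a b - l) < eps) ->
  is_RInt_gen f Fa Fb l.
Proof.
  intros H P [eps HP].
  destruct (H eps (cond_pos eps)) as [Qa [Qb [HA [HB HQ]]]].
  apply (Filter_prod _ _ _ Qa Qb HA HB).
  intros a b Ha Hb. destruct (HQ a b Ha Hb) as [Hex Hlt].
  exists (RInt f a b). split; [exact (RInt_correct f a b Hex) | now apply HP].
Qed.

Lemma exp_le_compat x y : x <= y -> exp x <= exp y.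
Proof. intros [H|H]; [now apply Rlt_le, exp_increasing | rewrite H; apply Rle_refl]. Qed.

Lemma Rpower_pos x y : 0 < Rpower x y.
Proof. apply exp_pos. Qed.

Lemma Rpower_base_1 p : Rpower 1 p = 1.
Proof. unfold Rpower. rewrite ln_1, Rmult_0_r. apply exp_0. Qed.

Lemma Rpower_plus_1 x p : 0 < x -> Rpower x (p + 1) = Rpower x p * x.
Proof. intros Hx. rewrite Rpower_plus, Rpower_1; auto. Qed.

Lemma Rpower_le_Rpower_neg x y p : 0 < x <= y -> p <= 0 -> Rpower y p <= Rpower x p.
Proof.
  intros Hxy Hp. unfold Rpower. apply exp_le_compat.
  assert (ln x <= ln y) by (apply ln_le; lra). nra.
Qed.

Lemma Rpower_lt_of_small b eps : 0 < b -> 0 < eps ->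
  exists d, 0 < d /\ forall s, 0 < s < d -> Rpower s b < eps.
Proof.
  intros Hb He. exists (Rpower eps (/ b)). split; [apply Rpower_pos|].
  intros s Hs. replace eps with (Rpower (Rpower eps (/ b)) b).
  - apply Rlt_Rpower_l; lra.
  - rewrite Rpower_mult. replace (/ b * b) with 1 by (field; lra). now rewrite Rpower_1.
Qed.

Lemma is_derive_Rpower x p : 0 < x -> is_derive (fun t => Rpower t p) x (p * Rpower x (p - 1)).
Proof. intros Hx. apply is_derive_Reals. now apply derivable_pt_lim_power. Qed.

Lemma is_derive_Rpower_sub c p x : x < c ->
  is_derive (fun t => Rpower (c - t) p) x (- p * Rpower (c - x) (p - 1)).
Proof.
  intros Hx.
  assert (Hlin : is_derive (fun t => c - t) x (-1)) by (auto_derive; auto; ring).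
  assert (H := is_derive_comp (fun t => Rpower t p) (fun t => c - t) x _ _
                 (is_derive_Rpower (c - x) p ltac:(lra)) Hlin).
  simpl in H. unfold scal in H; simpl in H; unfold mult in H; simpl in H.
  replace (- p * Rpower (c - x) (p - 1)) with (-1 * (p * Rpower (c - x) (p - 1))) by ring.
  exact H.
Qed.

Lemma continuous_Rpower x p : 0 < x -> continuous (fun t => Rpower t p) x.
Proof.
  intros Hx. apply (ex_derive_continuous (V := R_NormedModule)). eexists. now apply is_derive_Rpower.
Qed.

Lemma continuous_Rpower_sub c p x : x < c -> continuous (fun t => Rpower (c - t) p) x.
Proof.
  intros Hx. apply (ex_derive_continuous (V := R_NormedModule)). eexists.
  now apply is_derive_Rpower_sub.
Qed.

Lemma continuous_Rinv_Rpower_sub c p x : x < c -> continuous (fun t => / Rpower (c - t) p) x.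
Proof.
  intros Hx. apply (continuous_ext (fun t => Rpower (c - t) (- p))); [intros; apply Rpower_Ropp|].
  now apply continuous_Rpower_sub.
Qed.

Lemma is_derive_eq_R (f : R -> R) x (l1 l2 : R) : is_derive f x l1 -> l1 = l2 -> is_derive f x l2.
Proof. intros H ->; exact H. Qed.

Lemma continuous_bounded (f : R -> R) a b : a <= b ->
  (forall x, a <= x <= b -> continuous f x) ->
  exists M, forall x, a <= x <= b -> Rabs (f x) <= M.
Proof.
  intros Hab Hc.
  destruct (continuity_ab_maj (fun x => Rabs (f x)) a b Hab) as [m [Hm _]].
  { intros c Hcc. apply continuity_pt_filterlim, continuous_Rabs_comp, Hc; lra. }
  exists (Rabs (f m)). intros; now apply Hm.
Qed.

Lemma max_abs_ge (f : R -> R) a b x : a <= b ->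
  (forall y, a <= y <= b -> continuous f y) -> a <= x <= b ->
  Rabs (f x) <= max_abs f a b.
Proof.
  intros Hab Hc Hx. destruct (continuous_bounded f a b Hab Hc) as [M HM].
  unfold max_abs.
  destruct (Lub_Rbar_correct (fun y => exists t, a <= t <= b /\ y = Rabs (f t))) as [Hub Hlub].
  assert (H1 : Rbar_le (Rabs (f x)) (Lub_Rbar (fun y => exists t, a <= t <= b /\ y = Rabs (f t))))
    by (apply Hub; exists x; auto).
  assert (H2 : Rbar_le (Lub_Rbar (fun y => exists t, a <= t <= b /\ y = Rabs (f t))) M).
  { apply Hlub. intros y [t [Ht ->]]. now apply HM. }
  destruct (Lub_Rbar _); simpl in *; tauto.
Qed.

(** * Convexity and linear interpolation *)

Lemma convex_le_chord (g g1 g2 : R -> R) a b :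
  (forall x, a <= x <= b -> is_derive g x (g1 x)) ->
  (forall x, a <= x <= b -> is_derive g1 x (g2 x)) ->
  (forall x, a <= x <= b -> 0 <= g2 x) ->
  forall t, a <= t <= b -> (b - a) * g t <= (b - t) * g a + (t - a) * g b.
Proof.
  intros Hg Hg1 Hg2 t Ht.
  destruct (Req_dec t a) as [->|Hta]; [lra|].
  destruct (Req_dec t b) as [->|Htb]; [lra|].
  destruct (MVT_cor2 g g1 a t) as [x1 [E1 Hx1]]; [lra| intros c Hc; apply is_derive_Reals, Hg; lra |].
  destruct (MVT_cor2 g g1 t b) as [x2 [E2 Hx2]]; [lra| intros c Hc; apply is_derive_Reals, Hg; lra |].
  destruct (MVT_cor2 g1 g2 x1 x2) as [y [E3 Hy]]; [lra| intros c Hc; apply is_derive_Reals, Hg1; lra |].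
  assert (0 <= g2 y) by (apply Hg2; lra).
  assert (Hinc : 0 <= g1 x2 - g1 x1) by (rewrite E3; apply Rmult_le_pos; lra).
  replace ((b - t) * g a + (t - a) * g b) with
    ((b - a) * g t + (t - a) * (b - t) * (g1 x2 - g1 x1)) by nra.
  assert (0 <= (t - a) * (b - t) * (g1 x2 - g1 x1)) by (apply Rmult_le_pos; nra).
  lra.
Qed.

(* Apply [convex_le_chord] to [± u + M x^2 / 2], whose second derivative is nonnegative. *)
Lemma linear_interp_error (u u1 u2 : R -> R) a b M :
  (forall x, a <= x <= b -> is_derive u x (u1 x)) ->
  (forall x, a <= x <= b -> is_derive u1 x (u2 x)) ->
  (forall x, a <= x <= b -> Rabs (u2 x) <= M) ->
  forall t, a <= t <= b ->
  Rabs ((b - a) * u t - ((b - t) * u a + (t - a) * u b)) <= M / 2 * (t - a) * (b - t) * (b - a).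
Proof.
  intros Hu Hu1 Hu2 t Ht.
  assert (Hchord : forall e : R, e * e = 1 ->
    (b - a) * (e * u t + M / 2 * (t * t)) <=
    (b - t) * (e * u a + M / 2 * (a * a)) + (t - a) * (e * u b + M / 2 * (b * b))).
  { intros e He.
    apply (convex_le_chord (fun x => e * u x + M / 2 * (x * x)) (fun x => e * u1 x + M * x)
             (fun x => e * u2 x + M)); auto.
    - intros x Hx. apply (is_derive_plus (fun x => e * u x) (fun x => M / 2 * (x * x)));
        [apply (is_derive_scal u), Hu; lra | auto_derive; auto; field].
    - intros x Hx. apply (is_derive_plus (fun x => e * u1 x) (fun x => M * x));
        [apply (is_derive_scal u1), Hu1; lra | auto_derive; auto; ring].
    - intros x Hx. specialize (Hu2 x Hx). apply Rabs_le_between in Hu2.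
      destruct (Rle_lt_dec 0 e); nra. }
  assert (Hp := Hchord 1 ltac:(ring)). assert (Hm := Hchord (-1) ltac:(ring)).
  apply Rabs_le. split; nra.
Qed.

(** * The Gamma function on (0, 1) *)

Section GammaIntegral.
Variable x : R.
Hypothesis Hx : 0 < x < 1.
Let f := fun t => Rpower t (x - 1) * exp (- t).

Lemma continuous_Gamma_integrand t : 0 < t -> continuous f t.
Proof.
  intros Ht. apply continuous_mult_R; [now apply continuous_Rpower |].
  continuity_R.
Qed.

Lemma ex_RInt_Gamma_integrand a b : 0 < a <= b -> ex_RInt f a b.
Proof. intros Hab. apply ex_RInt_continuous_le; [lra|]. intros; apply continuous_Gamma_integrand; lra. Qed.

Lemma RInt_Gamma_integrand_mono a' a b b' :
  0 < a' <= a -> a <= b <= b' -> RInt f a b <= RInt f a' b'.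
Proof.
  intros Ha Hb.
  assert (Hpos : forall p q, 0 < p <= q -> 0 <= RInt f p q).
  { intros p q Hpq. apply RInt_ge_0; [lra | now apply ex_RInt_Gamma_integrand |].
    intros; apply Rlt_le, Rmult_lt_0_compat; [apply Rpower_pos | apply exp_pos]. }
  rewrite <- (RInt_Chasles_R f a' a b'), <- (RInt_Chasles_R f a b b')
    by (apply ex_RInt_Gamma_integrand; lra).
  assert (0 <= RInt f a' a) by (apply Hpos; lra).
  assert (0 <= RInt f b b') by (apply Hpos; lra).
  lra.
Qed.

(* [t^(x-1) e^-t <= t^(x-1)] on [a, 1] and [<= e^-t] on [1, b]. *)
Lemma RInt_Gamma_integrand_le a b : 0 < a <= 1 -> 1 <= b -> RInt f a b <= / x + 1.
Proof.
  intros Ha Hb.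
  rewrite <- (RInt_Chasles_R f a 1 b) by (apply ex_RInt_Gamma_integrand; lra).
  assert (E1 : RInt f a 1 <= / x).
  { apply Rle_trans with (RInt (fun t => Rpower t (x - 1)) a 1).
    - apply RInt_le; [lra | apply ex_RInt_Gamma_integrand; lra | |].
      + apply ex_RInt_continuous_le; [lra|]. intros; apply continuous_Rpower; lra.
      + intros t Ht. unfold f. rewrite <- (Rmult_1_r (Rpower t (x - 1))) at 2.
        apply Rmult_le_compat_l; [apply Rlt_le, Rpower_pos|].
        rewrite <- exp_0. apply exp_le_compat; lra.
    - rewrite (RInt_derive_R (fun t => / x * Rpower t x)).
      + rewrite Rpower_base_1. assert (0 < / x * Rpower a x)
          by (apply Rmult_lt_0_compat; [apply Rinv_0_lt_compat; lra | apply Rpower_pos]).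
        lra.
      + intros t Ht. rewrite Rmin_left, Rmax_right in Ht by lra.
        eapply is_derive_eq_R; [apply (is_derive_scal (fun t => Rpower t x)), is_derive_Rpower; lra |].
        simpl; field; lra.
      + intros t Ht. rewrite Rmin_left, Rmax_right in Ht by lra. apply continuous_Rpower; lra. }
  assert (E2 : RInt f 1 b <= 1).
  { apply Rle_trans with (RInt (fun t => exp (- t)) 1 b).
    - apply RInt_le; [lra | apply ex_RInt_Gamma_integrand; lra | |].
      + apply ex_RInt_continuous_le; [lra|]. intros.
        continuity_R.
      + intros t Ht. unfold f. rewrite <- (Rmult_1_l (exp (- t))) at 2.
        apply Rmult_le_compat_r; [apply Rlt_le, exp_pos|].
        assert (0 <= ln t) by (rewrite <- ln_1; apply ln_le; lra).
        unfold Rpower. rewrite <- exp_0 at 2. apply exp_le_compat. nra.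
    - rewrite (RInt_derive_R (fun t => - exp (- t))).
      + assert (0 < exp (- b)) by apply exp_pos.
        assert (exp (- (1)) <= exp 0) by (apply exp_le_compat; lra). rewrite exp_0 in *. lra.
      + intros t _. auto_derive; auto; ring.
      + intros t _. continuity_R. }
  lra.
Qed.

(* The integrals over [a, b] increase as [a] decreases and [b] increases, and are bounded:
   their supremum is the improper integral. *)
Lemma is_RInt_gen_Gamma_integrand :
  exists l, 0 < l /\ is_RInt_gen f (at_right 0) (Rbar_locally p_infty) l.
Proof.
  set (S := fun v => exists a b, 0 < a <= 1 /\ 1 <= b /\ v = RInt f a b).
  destruct (completeness S) as [l [Hub Hleast]].
  { exists (/ x + 1). intros v [a [b [Ha [Hb ->]]]]. now apply RInt_Gamma_integrand_le. }
  { exists (RInt f 1 1), 1, 1. repeat split; lra. }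
  exists l. split.
  { apply Rlt_le_trans with (RInt f (/ 2) 1).
    - apply RInt_gt_0; [lra | |].
      + intros; apply Rmult_lt_0_compat; [apply Rpower_pos | apply exp_pos].
      + intros; apply continuous_Gamma_integrand; lra.
    - apply Hub. exists (/ 2), 1. repeat split; lra. }
  apply is_RInt_gen_of_approx. intros eps He.
  assert (Hex : exists a0 b0, 0 < a0 <= 1 /\ 1 <= b0 /\ l - eps < RInt f a0 b0).
  { apply NNPP. intros Hn. assert (l <= l - eps); [|lra].
    apply Hleast. intros v [a [b [Ha [Hb ->]]]].
    apply Rnot_lt_le. intros Hc. apply Hn. exists a, b. auto. }
  destruct Hex as [a0 [b0 [Ha0 [Hb0 Hlt]]]].
  exists (fun a => 0 < a < a0), (fun b => b0 < b). split; [|split].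
  - exists (mkposreal a0 (proj1 Ha0)). intros y Hy Hy0.
    change (Rabs (y - 0) < a0) in Hy. rewrite Rminus_0_r, Rabs_right in Hy; lra.
  - exists b0. auto.
  - intros a b Ha Hb. split; [apply ex_RInt_Gamma_integrand; lra|].
    assert (RInt f a0 b0 <= RInt f a b) by (apply RInt_Gamma_integrand_mono; lra).
    assert (RInt f a b <= l) by (apply Hub; exists a, b; repeat split; lra).
    apply Rabs_lt_between'. lra.
Qed.

End GammaIntegral.

Lemma Gamma_spec x : 0 < x < 1 ->
  0 < Gamma x /\
  is_RInt_gen (fun t => Rpower t (x - 1) * exp (- t)) (at_right 0) (Rbar_locally p_infty) (Gamma x).
Proof.
  intros Hx. destruct (is_RInt_gen_Gamma_integrand x Hx) as [l [Hl Hint]].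
  replace (Gamma x) with l; [auto|].
  symmetry. exact (is_RInt_gen_unique (V := R_CompleteNormedModule) _ _ Hint).
Qed.

Lemma Rpower_exp_opp_lim_0 x : 0 < x ->
  filterlim (fun t => Rpower t x * exp (- t)) (at_right 0) (locally 0).
Proof.
  intros Hx. apply (filterlim_locally (T := R_UniformSpace)). intros eps.
  destruct (Rpower_lt_of_small x eps Hx (cond_pos eps)) as [d [Hd Hsmall]].
  exists (mkposreal d Hd). intros t Ht Ht0. change (Rabs (t - 0) < d) in Ht.
  rewrite Rminus_0_r, Rabs_right in Ht by lra.
  change (Rabs (Rpower t x * exp (- t) - 0) < eps).
  assert (exp (- t) <= 1) by (rewrite <- exp_0; apply exp_le_compat; lra).
  assert (Rpower t x < eps) by (apply Hsmall; lra).
  assert (0 < Rpower t x * exp (- t)) by (apply Rmult_lt_0_compat; [apply Rpower_pos | apply exp_pos]).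
  rewrite Rminus_0_r, Rabs_right by lra.
  assert (0 < Rpower t x) by apply Rpower_pos. nra.
Qed.

(* For [t >= 1]: [t^x e^-t <= t e^-t <= 4 / t], from [e^t = (e^(t/2))^2 >= t^2 / 4]. *)
Lemma Rpower_exp_opp_lim_infty x : 0 < x <= 1 ->
  filterlim (fun t => Rpower t x * exp (- t)) (Rbar_locally p_infty) (locally 0).
Proof.
  intros Hx. apply (filterlim_locally (T := R_UniformSpace)). intros eps.
  exists (Rmax 1 (4 / eps)). intros t Ht.
  assert (Ht1 : 1 < t) by (eapply Rle_lt_trans; [apply Rmax_l | exact Ht]).
  assert (Hte : 4 / eps < t) by (eapply Rle_lt_trans; [apply Rmax_r | exact Ht]).
  change (Rabs (Rpower t x * exp (- t) - 0) < eps).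
  assert (Hpos : 0 < Rpower t x * exp (- t)) by (apply Rmult_lt_0_compat; [apply Rpower_pos | apply exp_pos]).
  rewrite Rminus_0_r, Rabs_right by lra.
  assert (Hpow : Rpower t x <= t) by (rewrite <- (Rpower_1 t) at 2 by lra; apply Rle_Rpower; lra).
  assert (Hexp : t * t / 4 <= exp t).
  { replace t with (t / 2 + t / 2) at 3 by field. rewrite exp_plus.
    assert (t / 2 <= exp (t / 2)) by (pose proof (exp_ineq1_le (t / 2)); lra). nra. }
  assert (Hbound : Rpower t x * exp (- t) <= 4 / t).
  { rewrite exp_Ropp. apply Rmult_le_reg_r with (exp t * t); [apply Rmult_lt_0_compat; [apply exp_pos|lra]|].
    replace (Rpower t x * / exp t * (exp t * t)) with (Rpower t x * t) by (field; apply Rgt_not_eq, exp_pos).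
    replace (4 / t * (exp t * t)) with (4 * exp t) by (field; lra). nra. }
  assert (4 / t < eps).
  { apply Rmult_lt_reg_r with t; [lra|]. unfold Rdiv at 1. rewrite Rmult_assoc, Rinv_l, Rmult_1_r by lra.
    assert (E4 : 4 = eps * (4 / eps)) by (field; apply Rgt_not_eq, cond_pos).
    assert (eps * (4 / eps) < eps * t) by (apply Rmult_lt_compat_l; [apply cond_pos | exact Hte]).
    lra. }
  lra.
Qed.

Lemma filterlim_Ropp_0 : filterlim Ropp (locally 0) (locally 0).
Proof.
  assert (H := filterlim_opp (K := R_AbsRing) (V := R_NormedModule) 0).
  unfold opp in H; simpl in H. rewrite Ropp_0 in H. exact H.
Qed.

Lemma filter_prod_at_right_0_pos : filter_prod (at_right 0) (Rbar_locally p_infty)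
  (fun ab => forall t, Rmin (fst ab) (snd ab) <= t <= Rmax (fst ab) (snd ab) -> 0 < t).
Proof.
  apply (Filter_prod _ _ _ (fun a => 0 < a) (fun b => 0 < b)).
  - exists (mkposreal 1 Rlt_0_1). intros y _ Hy. exact Hy.
  - exists 0. auto.
  - intros a b Ha Hb t Ht. simpl in Ht.
    destruct (Rle_dec a b); [rewrite Rmin_left in Ht | rewrite Rmin_right in Ht]; lra.
Qed.

(* Integration by parts against [t^x e^-t], whose boundary terms vanish at [0] and [+oo]. *)
Lemma Gamma_succ x : 0 < x < 1 -> Gamma (x + 1) = x * Gamma x.
Proof.
  intros Hx. destruct (Gamma_spec x Hx) as [_ HG].
  set (F := fun t => - (Rpower t x * exp (- t))).
  assert (Hpos := filter_prod_at_right_0_pos).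
  assert (HdF : forall t, 0 < t ->
    is_derive F t (Rpower t (x + 1 - 1) * exp (- t) - x * (Rpower t (x - 1) * exp (- t)))).
  { intros t Ht. replace (x + 1 - 1) with x by ring.
    eapply is_derive_eq_R.
    - apply (is_derive_opp (fun t => Rpower t x * exp (- t))).
      apply (is_derive_mult (fun t => Rpower t x) (fun t => exp (- t)));
        [now apply is_derive_Rpower | auto_derive; auto | intros; apply Rmult_comm].
    - simpl. unfold plus, mult, opp; simpl. ring. }
  assert (HI : is_RInt_gen (Derive F) (at_right 0) (Rbar_locally p_infty) (0 - 0)).
  { apply is_RInt_gen_Derive.
    - refine (filter_imp _ _ _ Hpos). intros ab H t Ht. eexists. exact (HdF t (H t Ht)).
    - refine (filter_imp _ _ _ Hpos). intros ab H t Ht. specialize (H t Ht).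
      apply (continuous_ext_loc _
               (fun t => Rpower t (x + 1 - 1) * exp (- t) - x * (Rpower t (x - 1) * exp (- t)))).
      + exists (mkposreal t H). intros y Hy.
        change (Rabs (y - t) < t) in Hy. apply Rabs_lt_between in Hy.
        symmetry. apply is_derive_unique, HdF. lra.
      + continuity_R; apply continuous_Rpower; lra.
    - unfold F. apply (filterlim_comp _ _ _ (fun t => Rpower t x * exp (- t)) Ropp _ (locally 0));
        [apply Rpower_exp_opp_lim_0; lra | apply filterlim_Ropp_0].
    - unfold F. apply (filterlim_comp _ _ _ (fun t => Rpower t x * exp (- t)) Ropp _ (locally 0));
        [apply Rpower_exp_opp_lim_infty; lra | apply filterlim_Ropp_0]. }
  assert (Hsum := is_RInt_gen_plus _ _ _ _ HI (is_RInt_gen_scal _ x _ HG)).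
  match type of Hsum with is_RInt_gen _ _ _ ?l =>
    replace l with (x * Gamma x) in Hsum by (unfold plus, scal; simpl; unfold mult; simpl; ring) end.
  unfold Gamma at 1. apply (is_RInt_gen_unique (V := R_CompleteNormedModule)).
  refine (is_RInt_gen_ext _ _ _ _ Hsum).
  refine (filter_imp _ _ _ Hpos). intros ab H t Ht. simpl.
  rewrite (is_derive_unique _ _ _ (HdF t (H t ltac:(lra)))).
  unfold plus, scal; simpl; unfold mult; simpl. ring.
Qed.

(** * The Caputo integral over the last cell *)

(* [s_+^p]: unlike [Rpower s p], which is [1] at [s = 0], this is continuous at [0] for [p > 0]. *)
Definition pos_pow (p s : R) : R := if Rlt_dec 0 s then Rpower s p else 0.

Lemma pos_pow_pos p s : 0 < s -> pos_pow p s = Rpower s p.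
Proof. intros H; unfold pos_pow; destruct (Rlt_dec 0 s); tauto. Qed.

Lemma pos_pow_nonpos p s : s <= 0 -> pos_pow p s = 0.
Proof. intros H; unfold pos_pow; destruct (Rlt_dec 0 s); [lra | auto]. Qed.

Lemma locally_gt (s c : R) : c < s -> locally s (fun y => c < y).
Proof.
  intros H. exists (mkposreal (s - c) ltac:(lra)). intros y Hy.
  change (Rabs (y - s) < s - c) in Hy. apply Rabs_lt_between in Hy. lra.
Qed.

Lemma locally_lt (s c : R) : s < c -> locally s (fun y => y < c).
Proof.
  intros H. exists (mkposreal (c - s) ltac:(lra)). intros y Hy.
  change (Rabs (y - s) < c - s) in Hy. apply Rabs_lt_between in Hy. lra.
Qed.

Lemma continuous_pos_pow p s : 0 < p -> continuous (pos_pow p) s.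
Proof.
  intros Hp. destruct (Rtotal_order s 0) as [Hs|[Hs|Hs]].
  - apply (continuous_ext_loc _ (fun _ => 0)); [|apply continuous_const].
    apply (filter_imp _ _ (fun y Hy => eq_sym (pos_pow_nonpos p y (Rlt_le _ _ Hy))) (locally_lt s 0 Hs)).
  - subst. apply continuity_pt_filterlim. intros eps He.
    destruct (Rpower_lt_of_small p eps Hp He) as [d [Hd Hsmall]].
    exists d. split; [lra|]. intros y [_ Hy]. simpl in *. unfold R_dist in *.
    rewrite (pos_pow_nonpos p 0), Rminus_0_r by lra. rewrite Rminus_0_r in Hy.
    unfold pos_pow. destruct (Rlt_dec 0 y).
    + rewrite Rabs_right in * by (apply Rle_ge; try apply Rlt_le, Rpower_pos; lra). apply Hsmall; lra.
    + rewrite Rabs_R0; lra.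
  - apply (continuous_ext_loc _ (fun y => Rpower y p)); [|apply continuous_Rpower; lra].
    apply (filter_imp _ _ (fun y Hy => eq_sym (pos_pow_pos p y Hy)) (locally_gt s 0 Hs)).
Qed.

Lemma is_derive_pos_pow p s : 1 < p -> is_derive (pos_pow p) s (p * pos_pow (p - 1) s).
Proof.
  intros Hp. destruct (Rtotal_order s 0) as [Hs|[Hs|Hs]].
  - rewrite pos_pow_nonpos, Rmult_0_r by lra.
    apply (is_derive_ext_loc (fun _ => 0)); [|apply (is_derive_const (K := R_AbsRing) 0)].
    apply (filter_imp _ _ (fun y Hy => eq_sym (pos_pow_nonpos p y (Rlt_le _ _ Hy))) (locally_lt s 0 Hs)).
  - subst. rewrite pos_pow_nonpos, Rmult_0_r by lra. apply is_derive_Reals.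
    intros eps He. destruct (Rpower_lt_of_small (p - 1) eps ltac:(lra) He) as [d [Hd Hsmall]].
    exists (mkposreal d Hd). intros y Hy0 Hy. simpl in Hy.
    rewrite Rplus_0_l, (pos_pow_nonpos p 0), !Rminus_0_r by lra.
    unfold pos_pow. destruct (Rlt_dec 0 y).
    + rewrite <- (Rpower_1 y) at 2 by lra. unfold Rdiv. rewrite <- Rpower_Ropp, <- Rpower_plus.
      rewrite Rabs_right by (apply Rle_ge, Rlt_le, Rpower_pos).
      rewrite Rabs_right in Hy by lra. apply Hsmall; lra.
    + unfold Rdiv; rewrite Rmult_0_l, Rabs_R0; lra.
  - rewrite pos_pow_pos by lra.
    apply (is_derive_ext_loc (fun y => Rpower y p)); [|apply is_derive_Rpower; lra].
    apply (filter_imp _ _ (fun y Hy => eq_sym (pos_pow_pos p y Hy)) (locally_gt s 0 Hs)).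
Qed.

Lemma continuous_pos_pow_sub p c t : 0 < p -> continuous (fun s => pos_pow p (c - s)) t.
Proof.
  intros Hp. apply (continuous_comp (fun s => c - s) (pos_pow p));
    [continuity_R | now apply continuous_pos_pow].
Qed.

Lemma RInt_pos_pow_sub p c x : 0 < p -> x < c ->
  RInt (fun t => pos_pow p (c - t)) x c = Rpower (c - x) (p + 1) / (p + 1).
Proof.
  intros Hp Hx.
  rewrite (RInt_derive_R (fun t => - pos_pow (p + 1) (c - t) / (p + 1))).
  - rewrite (pos_pow_nonpos _ (c - c)), pos_pow_pos by lra. eq_R; field; lra.
  - intros t _. eapply is_derive_eq_R.
    + apply (is_derive_ext (fun t => (- / (p + 1)) * pos_pow (p + 1) (c - t)));
        [intros z; simpl; unfold Rdiv; ring|].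
      apply (is_derive_scal (fun t => pos_pow (p + 1) (c - t))).
      apply (is_derive_comp (pos_pow (p + 1)) (fun t => c - t));
        [apply is_derive_pos_pow; lra | auto_derive; auto].
    + simpl. replace (p + 1 - 1) with p by ring. unfold scal; simpl; unfold mult; simpl. field. lra.
  - intros t _. now apply continuous_pos_pow_sub.
Qed.

Lemma RInt_sub_id c x : RInt (fun t => c - t) x c = (c - x) * (c - x) / 2.
Proof.
  rewrite (RInt_derive_R (fun t => - ((c - t) * (c - t)) / 2)).
  - eq_R; field.
  - intros t _. auto_derive; auto. field.
  - intros t _. continuity_R.
Qed.

Lemma RInt_taylor1 (u : R -> R) p q : p <= q ->
  (forall t, p <= t <= q -> ex_derive u t /\ ex_derive (Derive u) t /\ continuous (Derive_n u 2) t) ->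
  RInt (fun t => (q - t) * Derive_n u 2 t) p q = u q - (q - p) * Derive u p - u p.
Proof.
  intros Hpq Hu.
  rewrite (RInt_derive_R (fun t => (q - t) * Derive u t + u t)).
  - replace (q - q) with 0 by ring. eq_R; ring.
  - intros t Ht. rewrite Rmin_left, Rmax_right in Ht by lra. eapply is_derive_eq_R.
    + apply (is_derive_plus (fun t => (q - t) * Derive u t) u);
        [apply (is_derive_mult (fun t => q - t) (Derive u)) | apply Derive_correct, Hu; lra].
      * auto_derive; auto.
      * apply Derive_correct, Hu; lra.
      * intros; apply Rmult_comm.
    + change (Derive_n u 2 t) with (Derive (Derive u) t). unfold plus, mult; simpl. ring.
  - intros t Ht. rewrite Rmin_left, Rmax_right in Ht by lra.
    continuity_R. apply Hu; lra.
Qed.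

Lemma is_RInt_gen_at_left (g : R -> R) p q l : p < q ->
  (forall y, p <= y < q -> ex_RInt g p y) ->
  (forall eps, 0 < eps -> exists d, 0 < d /\ forall y, q - d < y < q -> Rabs (RInt g p y - l) < eps) ->
  is_RInt_gen g (at_point p) (at_left q) l.
Proof.
  intros Hpq Hex Hlim. apply is_RInt_gen_of_approx. intros eps He.
  destruct (Hlim eps He) as [d [Hd Hclose]].
  exists (fun x => x = p), (fun y => Rmax p (q - d) < y < q). split; [reflexivity|split].
  - exists (mkposreal (Rmin d (q - p)) ltac:(apply Rmin_pos; lra)). intros y Hy Hyq.
    change (Rabs (y - q) < Rmin d (q - p)) in Hy. apply Rabs_lt_between in Hy.
    pose proof (Rmin_l d (q - p)). pose proof (Rmin_r d (q - p)).
    split; [apply Rmax_lub_lt|]; lra.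
  - intros x y -> Hy. pose proof (Rmax_l p (q - d)). pose proof (Rmax_r p (q - d)).
    split; [apply Hex | apply Hclose]; lra.
Qed.

Definition caputo_last_cell (a p q : R) (u : R -> R) : R :=
  Derive u p * Rpower (q - p) (1 - a) / (1 - a)
  + / (1 - a) * RInt (fun t => Derive_n u 2 t * pos_pow (1 - a) (q - t)) p q.

Section LastCell.
Variables (a p q : R) (u : R -> R).
Hypothesis Ha : 0 < a < 1.
Hypothesis Hpq : p < q.
Hypothesis Hu : forall t, p <= t <= q ->
  ex_derive u t /\ ex_derive (Derive u) t /\ continuous (Derive_n u 2) t.

Let g := fun t => Derive u t / Rpower (q - t) a.
Let F := fun t => Derive_n u 2 t * pos_pow (1 - a) (q - t).
Let Phi := fun t => - Derive u t * Rpower (q - t) (1 - a) / (1 - a).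

Lemma continuous_Derive_cell t : p <= t <= q -> continuous (Derive u) t.
Proof. intros Ht. apply (ex_derive_continuous (V := R_NormedModule)), Hu, Ht. Qed.

Lemma continuous_last_cell_remainder t : p <= t <= q -> continuous F t.
Proof. intros Ht. apply continuous_mult_R; [apply Hu, Ht | apply continuous_pos_pow_sub; lra]. Qed.

Lemma ex_RInt_last_cell_remainder x y : p <= x <= y -> y <= q -> ex_RInt F x y.
Proof.
  intros Hx Hy. apply ex_RInt_continuous_le; [lra|].
  intros; apply continuous_last_cell_remainder; lra.
Qed.

(* Integration by parts with [-(q - t)^(1-a) / (1-a)] as antiderivative of [(q - t)^-a]. *)
Lemma RInt_last_cell_parts y : p <= y < q ->
  ex_RInt g p y /\ RInt g p y = Phi y - Phi p + / (1 - a) * RInt F p y.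
Proof.
  intros Hy.
  set (dPhi := fun t => Derive u t * Rpower (q - t) (- a) - / (1 - a) * F t).
  assert (Hd : forall t, Rmin p y <= t <= Rmax p y -> is_derive Phi t (dPhi t)).
  { intros t Ht. rewrite Rmin_left, Rmax_right in Ht by lra.
    unfold Phi, dPhi, F. rewrite pos_pow_pos by lra. eapply is_derive_eq_R.
    - apply (is_derive_ext (fun t => (- / (1 - a)) * (Derive u t * Rpower (q - t) (1 - a))));
        [intros z; simpl; unfold Rdiv; ring|].
      apply (is_derive_scal (fun t => Derive u t * Rpower (q - t) (1 - a))).
      apply (is_derive_mult (Derive u) (fun t => Rpower (q - t) (1 - a)));
        [apply Derive_correct, Hu; lra | apply is_derive_Rpower_sub; lra | intros; apply Rmult_comm].
    - replace (1 - a - 1) with (- a) by ring. change (Derive_n u 2 t) with (Derive (Derive u) t).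
      unfold plus, scal, mult; simpl; unfold mult; simpl. field. lra. }
  assert (Hc : forall t, Rmin p y <= t <= Rmax p y -> continuous dPhi t).
  { intros t Ht. rewrite Rmin_left, Rmax_right in Ht by lra. unfold dPhi.
    continuity_R; [apply continuous_Derive_cell; lra | apply continuous_Rpower_sub; lra
                  | apply continuous_last_cell_remainder; lra]. }
  assert (HF : ex_RInt F p y) by (apply ex_RInt_last_cell_remainder; lra).
  assert (Hg : forall t, g t = dPhi t + / (1 - a) * F t).
  { intros t. unfold g, dPhi. rewrite Rpower_Ropp. field. split; [lra | apply Rgt_not_eq, Rpower_pos]. }
  assert (HdPhi : ex_RInt dPhi p y) by exact (ex_RInt_derive_R Phi dPhi p y Hd Hc).
  assert (HsF : ex_RInt (fun t => / (1 - a) * F t) p y) by now apply ex_RInt_scal_R.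
  rewrite (RInt_ext g (fun t => dPhi t + / (1 - a) * F t)) by (intros; apply Hg).
  rewrite (RInt_plus_R _ _ _ _ HdPhi HsF), (RInt_scal_R _ _ _ _ HF), (RInt_derive_R Phi dPhi p y Hd Hc).
  split; [|reflexivity].
  apply (ex_RInt_ext (fun t => dPhi t + / (1 - a) * F t)); [intros; symmetry; apply Hg|].
  now apply ex_RInt_plus_R.
Qed.

Lemma last_cell_boundary_small eps : 0 < eps ->
  exists d, 0 < d /\ forall y, p <= y < q -> q - y < d -> Rabs (Phi y) < eps.
Proof.
  intros He.
  destruct (continuous_bounded (Derive u) p q ltac:(lra) continuous_Derive_cell) as [M HM].
  assert (HM0 : 0 <= M) by (pose proof (HM p ltac:(lra)); pose proof (Rabs_pos (Derive u p)); lra).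
  destruct (Rpower_lt_of_small (1 - a) (eps * (1 - a) / (M + 1)) ltac:(lra)) as [d [Hd Hsmall]];
    [apply Rdiv_lt_0_compat; nra|].
  exists d. split; [exact Hd|]. intros y Hy Hyd.
  assert (Hpow := Rpower_pos (q - y) (1 - a)).
  assert (Hsm := Hsmall (q - y) ltac:(lra)). assert (HDu := HM y ltac:(lra)).
  replace (Rabs (Phi y)) with (Rabs (Derive u y) * Rpower (q - y) (1 - a) / (1 - a)).
  2: { unfold Phi, Rdiv. rewrite !Rabs_mult, Rabs_Ropp, (Rabs_right (Rpower _ _)), (Rabs_right (/ _));
       [reflexivity | apply Rle_ge, Rlt_le, Rinv_0_lt_compat; lra | lra]. }
  apply Rmult_lt_reg_r with ((1 - a) / (M + 1)); [apply Rdiv_lt_0_compat; lra|].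
  replace (Rabs (Derive u y) * Rpower (q - y) (1 - a) / (1 - a) * ((1 - a) / (M + 1)))
    with (Rabs (Derive u y) / (M + 1) * Rpower (q - y) (1 - a)) by (field; lra).
  replace (eps * ((1 - a) / (M + 1))) with (eps * (1 - a) / (M + 1)) by (field; lra).
  assert (Rabs (Derive u y) / (M + 1) < 1)
    by (apply Rmult_lt_reg_r with (M + 1); [lra|]; unfold Rdiv; rewrite Rmult_assoc, Rinv_l; lra).
  assert (0 <= Rabs (Derive u y) / (M + 1)) by (apply Rdiv_le_0_compat; [apply Rabs_pos | lra]).
  nra.
Qed.

Lemma last_cell_tail_small eps : 0 < eps ->
  exists d, 0 < d /\ forall y, p <= y <= q -> q - y < d -> Rabs (RInt F y q) < eps.
Proof.
  intros He.
  destruct (continuous_bounded F p q ltac:(lra) continuous_last_cell_remainder) as [M HM].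
  assert (HM0 : 0 <= M) by (pose proof (HM p ltac:(lra)); pose proof (Rabs_pos (F p)); lra).
  exists (eps / (M + 1)). split; [apply Rdiv_lt_0_compat; lra|]. intros y Hy Hyd.
  eapply Rle_lt_trans.
  { apply (abs_RInt_le_const F y q M); [lra | apply ex_RInt_last_cell_remainder; lra |].
    intros; apply HM; lra. }
  apply Rle_lt_trans with ((q - y) * (M + 1)); [nra|].
  apply Rmult_lt_reg_r with (/ (M + 1)); [apply Rinv_0_lt_compat; lra|].
  replace ((q - y) * (M + 1) * / (M + 1)) with (q - y) by (field; lra).
  exact Hyd.
Qed.

Lemma is_RInt_gen_last_cell : is_RInt_gen g (at_point p) (at_left q) (caputo_last_cell a p q u).
Proof.
  apply is_RInt_gen_at_left; [exact Hpq | intros; apply RInt_last_cell_parts; lra |].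
  intros eps He.
  destruct (last_cell_boundary_small (eps / 2)) as [d1 [Hd1 Hphi]]; [lra|].
  destruct (last_cell_tail_small ((1 - a) * (eps / 2))) as [d2 [Hd2 Htail]]; [nra|].
  exists (Rmin (q - p) (Rmin d1 d2)). split; [repeat apply Rmin_pos; lra|].
  intros y Hy.
  pose proof (Rmin_l (q - p) (Rmin d1 d2)). pose proof (Rmin_r (q - p) (Rmin d1 d2)).
  pose proof (Rmin_l d1 d2). pose proof (Rmin_r d1 d2).
  destruct (RInt_last_cell_parts y ltac:(lra)) as [_ ->]. unfold caputo_last_cell. fold F.
  rewrite <- (RInt_Chasles_R F p y q) by (apply ex_RInt_last_cell_remainder; lra).
  replace (Phi y - Phi p + / (1 - a) * RInt F p y -
           (Derive u p * Rpower (q - p) (1 - a) / (1 - a) + / (1 - a) * (RInt F p y + RInt F y q)))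
    with (Phi y + - (RInt F y q / (1 - a))) by (unfold Phi; field; lra).
  eapply Rle_lt_trans; [apply Rabs_triang|]. rewrite Rabs_Ropp.
  unfold Rdiv. rewrite Rabs_mult, (Rabs_right (/ _)) by (apply Rle_ge, Rlt_le, Rinv_0_lt_compat; lra).
  assert (Hphi' := Hphi y ltac:(lra) ltac:(lra)). assert (Htail' := Htail y ltac:(lra) ltac:(lra)).
  assert (Rabs (RInt F y q) * / (1 - a) < eps / 2).
  { apply Rmult_lt_reg_r with (1 - a); [lra|]. rewrite Rmult_assoc, Rinv_l by lra. lra. }
  lra.
Qed.

Let weight := fun t => pos_pow (1 - a) (q - t) - Rpower (q - p) (- a) * (q - t).

Lemma continuous_weight t : continuous weight t.
Proof. unfold weight. continuity_R. apply continuous_pos_pow_sub. lra. Qed.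

Lemma ex_RInt_cell (f : R -> R) : (forall t, p <= t <= q -> continuous f t) -> ex_RInt f p q.
Proof. intros Hf. apply ex_RInt_continuous_le; [lra | exact Hf]. Qed.

(* [(q - t)^(1-a) = (q - t) (q - t)^-a >= (q - t) (q - p)^-a]. *)
Lemma weight_nonneg t : p <= t <= q -> 0 <= weight t.
Proof.
  intros Ht. unfold weight. destruct (Req_dec t q) as [->|Hne].
  - rewrite pos_pow_nonpos by lra. replace (q - q) with 0 by ring. lra.
  - rewrite pos_pow_pos by lra. replace (1 - a) with (- a + 1) by ring.
    rewrite Rpower_plus_1 by lra.
    assert (Rpower (q - p) (- a) <= Rpower (q - t) (- a)) by (apply Rpower_le_Rpower_neg; lra).
    nra.
Qed.

Lemma RInt_weight :
  RInt weight p q = Rpower (q - p) (2 - a) / (2 - a) - Rpower (q - p) (2 - a) / 2.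
Proof.
  assert (Hsub : ex_RInt (fun t => q - t) p q) by (apply ex_RInt_cell; intros; continuity_R).
  assert (Hpp : ex_RInt (fun t => pos_pow (1 - a) (q - t)) p q)
    by (apply ex_RInt_cell; intros; apply continuous_pos_pow_sub; lra).
  unfold weight. rewrite (RInt_minus_R _ _ _ _ Hpp (ex_RInt_scal_R _ _ _ _ Hsub)).
  rewrite (RInt_scal_R _ _ _ _ Hsub), RInt_pos_pow_sub, RInt_sub_id by lra.
  replace (1 - a + 1) with (- a + 1 + 1) by ring. replace (2 - a) with (- a + 1 + 1) by ring.
  rewrite !Rpower_plus_1 by lra. eq_R. field. lra.
Qed.

(* [RInt_taylor1] rewrites the difference quotient as an integral against [u'']. *)
Lemma caputo_last_cell_weighted :
  caputo_last_cell a p q u - (u q - u p) / (Rpower (q - p) a * (1 - a))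
  = / (1 - a) * RInt (fun t => Derive_n u 2 t * weight t) p q.
Proof.
  assert (Hu2 : forall t, p <= t <= q -> continuous (Derive_n u 2) t) by (intros; apply Hu; lra).
  assert (HF : ex_RInt (fun t => Derive_n u 2 t * pos_pow (1 - a) (q - t)) p q).
  { apply ex_RInt_cell. intros. apply continuous_mult_R; [auto | apply continuous_pos_pow_sub; lra]. }
  assert (Hl : ex_RInt (fun t => (q - t) * Derive_n u 2 t) p q)
    by (apply ex_RInt_cell; intros; continuity_R; auto).
  unfold caputo_last_cell.
  rewrite (RInt_ext (fun t => Derive_n u 2 t * weight t) (fun t => Derive_n u 2 t *
             pos_pow (1 - a) (q - t) - Rpower (q - p) (- a) * ((q - t) * Derive_n u 2 t)))
    by (intros; unfold weight; eq_R; ring).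
  rewrite (RInt_minus_R _ _ _ _ HF (ex_RInt_scal_R _ _ _ _ Hl)), (RInt_scal_R _ _ _ _ Hl).
  rewrite (RInt_taylor1 u p q) by (auto; lra).
  replace (1 - a) with (- a + 1) by ring.
  rewrite Rpower_plus_1, !Rpower_Ropp by lra. field.
  split; [apply Rgt_not_eq, Rpower_pos | lra].
Qed.

Lemma caputo_last_cell_error M : (forall t, p <= t <= q -> Rabs (Derive_n u 2 t) <= M) ->
  Rabs (caputo_last_cell a p q u - (u q - u p) / (Rpower (q - p) a * (1 - a)))
  <= M * (Rpower (q - p) (2 - a) / (2 - a) - Rpower (q - p) (2 - a) / 2) / (1 - a).
Proof.
  intros HM. rewrite caputo_last_cell_weighted, <- RInt_weight.
  assert (Hu2 : forall t, p <= t <= q -> continuous (Derive_n u 2) t) by (intros; apply Hu; lra).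
  assert (Hw := continuous_weight).
  rewrite Rabs_mult, Rabs_right by (apply Rle_ge, Rlt_le, Rinv_0_lt_compat; lra).
  rewrite Rmult_comm. unfold Rdiv. apply Rmult_le_compat_r; [apply Rlt_le, Rinv_0_lt_compat; lra|].
  eapply Rle_trans;
    [apply abs_RInt_le; [lra | apply ex_RInt_cell; intros; apply continuous_mult_R; auto]|].
  rewrite <- RInt_scal_R by (apply ex_RInt_cell; auto).
  apply RInt_le; [lra | apply ex_RInt_cell; intros; apply continuous_Rabs_comp, continuous_mult_R; auto
                 | apply ex_RInt_scal_R, ex_RInt_cell; auto |].
  intros t Ht. rewrite Rabs_mult, (Rabs_right (weight t)) by (apply Rle_ge, weight_nonneg; lra).
  apply Rmult_le_compat_r; [apply weight_nonneg | apply HM]; lra.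
Qed.

End LastCell.

Lemma fold_right_Rplus_shift (l : list R) x : fold_right Rplus x l = fold_right Rplus 0 l + x.
Proof. induction l; simpl; [ring | rewrite IHl; ring]. Qed.

Lemma sumk_0 F : sumk 1 0 F = 0.
Proof. reflexivity. Qed.

Lemma sumk_S k F : sumk 1 (S k) F = sumk 1 k F + F (S k).
Proof.
  unfold sumk. replace (S (S k) - 1)%nat with (S k) by lia. replace (S k - 1)%nat with k by lia.
  rewrite seq_S, map_app, fold_right_app. simpl. rewrite fold_right_Rplus_shift. ring.
Qed.

Lemma sumk_ext k F G : (forall l, (1 <= l <= k)%nat -> F l = G l) -> sumk 1 k F = sumk 1 k G.
Proof.
  induction k; intros H; [reflexivity|].
  rewrite !sumk_S, IHk, (H (S k)); auto; intros; try apply H; lia.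
Qed.

Lemma sumk_plus k F G : sumk 1 k (fun l => F l + G l) = sumk 1 k F + sumk 1 k G.
Proof. induction k; [rewrite !sumk_0; ring | rewrite !sumk_S, IHk; ring]. Qed.

Lemma sumk_minus k F G : sumk 1 k (fun l => F l - G l) = sumk 1 k F - sumk 1 k G.
Proof. induction k; [rewrite !sumk_0; ring | rewrite !sumk_S, IHk; ring]. Qed.

Lemma sumk_scal k c F : sumk 1 k (fun l => c * F l) = c * sumk 1 k F.
Proof. induction k; [rewrite !sumk_0; ring | rewrite !sumk_S, IHk; ring]. Qed.

Lemma sumk_scal_r k c F : sumk 1 k (fun l => F l * c) = sumk 1 k F * c.
Proof. induction k; [rewrite !sumk_0; ring | rewrite !sumk_S, IHk; ring]. Qed.

Lemma sumk_const k c : sumk 1 k (fun _ => c) = INR k * c.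
Proof. induction k; [rewrite sumk_0; simpl; ring | rewrite sumk_S, IHk, S_INR; ring]. Qed.

Lemma sumk_le k F G : (forall l, (1 <= l <= k)%nat -> F l <= G l) -> sumk 1 k F <= sumk 1 k G.
Proof.
  induction k; intros H; [rewrite !sumk_0; lra|].
  rewrite !sumk_S. apply Rplus_le_compat; [apply IHk; intros; apply H | apply H]; lia.
Qed.

Lemma sumk_abs k F : Rabs (sumk 1 k F) <= sumk 1 k (fun l => Rabs (F l)).
Proof.
  induction k; [rewrite !sumk_0, Rabs_R0; lra|].
  rewrite !sumk_S. eapply Rle_trans; [apply Rabs_triang | lra].
Qed.

Lemma sumk_telescope k (G : nat -> R) : sumk 1 k (fun l => G l - G (l - 1)%nat) = G k - G 0%nat.
Proof.
  induction k; [rewrite sumk_0; ring|].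
  rewrite sumk_S, IHk. replace (S k - 1)%nat with k by lia. ring.
Qed.

Lemma sumk_swap k N (F : nat -> nat -> R) :
  sumk 1 N (fun i => sumk 1 k (fun l => F i l)) = sumk 1 k (fun l => sumk 1 N (fun i => F i l)).
Proof.
  induction N.
  - rewrite sumk_0, (sumk_ext k _ (fun _ => 0)) by (intros; apply sumk_0). rewrite sumk_const. ring.
  - rewrite sumk_S, IHN, <- sumk_plus. apply sumk_ext. intros l _. now rewrite sumk_S.
Qed.

Lemma RInt_sumk N (f : nat -> R -> R) x y :
  (forall i, (1 <= i <= N)%nat -> ex_RInt (f i) x y) ->
  ex_RInt (fun t => sumk 1 N (fun i => f i t)) x y /\
  RInt (fun t => sumk 1 N (fun i => f i t)) x y = sumk 1 N (fun i => RInt (f i) x y).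
Proof.
  induction N; intros H.
  - split.
    + apply (ex_RInt_ext (fun _ => 0)); [intros; now rewrite sumk_0 | apply ex_RInt_const].
    + rewrite sumk_0, (RInt_ext _ (fun _ => 0)) by (intros; apply sumk_0). rewrite RInt_const_R. eq_R; ring.
  - destruct IHN as [H1 H2]; [intros; apply H; lia|].
    assert (E : forall t, sumk 1 (S N) (fun i => f i t) = sumk 1 N (fun i => f i t) + f (S N) t)
      by (intros; apply sumk_S).
    assert (HS : ex_RInt (f (S N)) x y) by (apply H; lia).
    split.
    + apply (ex_RInt_ext (fun t => sumk 1 N (fun i => f i t) + f (S N) t)); [intros; now rewrite E|].
      now apply ex_RInt_plus_R.
    + rewrite (RInt_ext _ (fun t => sumk 1 N (fun i => f i t) + f (S N) t)) by (intros; apply E).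
      rewrite sumk_S, <- H2. now apply RInt_plus_R.
Qed.

Lemma tk_S h j : tk h (S j) = tk h j + h.
Proof. unfold tk. rewrite S_INR. ring. Qed.

Lemma tk_pred h l : (1 <= l)%nat -> tk h l = tk h (l - 1) + h.
Proof. intros Hl. replace l with (S (l - 1)) at 1 by lia. apply tk_S. Qed.

Lemma tk_0 h : tk h 0 = 0.
Proof. unfold tk. simpl. ring. Qed.

Lemma tk_nonneg h j : 0 <= h -> 0 <= tk h j.
Proof. intros Hh. unfold tk. apply Rmult_le_pos; [apply pos_INR | exact Hh]. Qed.

Lemma tk_le h i j : 0 <= h -> (i <= j)%nat -> tk h i <= tk h j.
Proof. intros Hh Hij. unfold tk. apply Rmult_le_compat_r; [exact Hh | now apply le_INR]. Qed.

Lemma tk_lt h i j : 0 < h -> (i < j)%nat -> tk h i < tk h j.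
Proof. intros Hh Hij. unfold tk. apply Rmult_lt_compat_r; [exact Hh | now apply lt_INR]. Qed.

Lemma RInt_grid_sum (f : R -> R) h j : 0 < h ->
  (forall t, 0 <= t <= tk h j -> continuous f t) ->
  RInt f 0 (tk h j) = sumk 1 j (fun l => RInt f (tk h (l - 1)) (tk h l)).
Proof.
  intros Hh Hf. induction j.
  - rewrite sumk_0, tk_0. apply RInt_point_R.
  - assert (Hj := tk_S h j). assert (Hj0 := tk_nonneg h j (Rlt_le _ _ Hh)).
    rewrite sumk_S, <- IHj by (intros; apply Hf; lra). replace (S j - 1)%nat with j by lia.
    symmetry. apply RInt_Chasles_R; apply ex_RInt_continuous_le; try lra; intros; apply Hf; lra.
Qed.

Lemma continuous_sumk N (f : nat -> R -> R) x :
  (forall i, continuous (f i) x) -> continuous (fun t => sumk 1 N (fun i => f i t)) x.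
Proof.
  intros Hf. induction N.
  - apply (continuous_ext (fun _ => 0)); [intros; now rewrite sumk_0 | apply continuous_const].
  - apply (continuous_ext (fun t => sumk 1 N (fun i => f i t) + f (S N) t));
      [intros; now rewrite sumk_S | now apply continuous_plus_R].
Qed.

(** * The kernel (c - t)^(-1-a) against quadratic bubbles *)

Section Kernel.
Variable a : R.
Hypothesis Ha : 0 < a < 1.

(* Mean value theorem for the decreasing function [y^-a]. *)
Lemma Rpower_neg_increment_ge x d : 0 < d < x ->
  d * Rpower x (-1 - a) <= (Rpower (x - d) (- a) - Rpower x (- a)) / a.
Proof.
  intros Hd.
  destruct (MVT_cor2 (fun y => Rpower y (- a)) (fun y => - a * Rpower y (- a - 1)) (x - d) x)
    as [z [Ez Hz]]; [lra | intros c Hc; apply derivable_pt_lim_power; lra |].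
  replace (x - (x - d)) with d in Ez by ring.
  assert (Rpower x (-1 - a) <= Rpower z (- a - 1))
    by (replace (- a - 1) with (-1 - a) by ring; apply Rpower_le_Rpower_neg; lra).
  replace (Rpower (x - d) (- a) - Rpower x (- a)) with (a * (d * Rpower z (- a - 1))) by nra.
  replace (a * (d * Rpower z (- a - 1)) / a) with (d * Rpower z (- a - 1)) by (field; lra).
  apply Rmult_le_compat_l; lra.
Qed.

(* Simpson-type bound: the kernel is convex, so it lies below its chord on [p, q]. *)
Lemma RInt_bubble_kernel_le c p q : p < q -> q < c ->
  RInt (fun t => (t - p) * (q - t) * Rpower (c - t) (-1 - a)) p q
  <= (q - p) ^ 3 / 12 * (Rpower (c - p) (-1 - a) + Rpower (c - q) (-1 - a)).
Proof.
  intros Hpq Hqc.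
  set (K := fun t => Rpower (c - t) (-1 - a)). fold (K p) (K q).
  set (L := q - p).
  assert (Hchord : forall t, p <= t <= q -> (q - p) * K t <= (q - t) * K p + (t - p) * K q).
  { apply (convex_le_chord K (fun t => (1 + a) * Rpower (c - t) (-2 - a))
             (fun t => (1 + a) * ((2 + a) * Rpower (c - t) (-3 - a)))).
    - intros t Ht. eapply is_derive_eq_R; [apply is_derive_Rpower_sub; lra|].
      replace (-1 - a - 1) with (-2 - a) by ring. ring.
    - intros t Ht. eapply is_derive_eq_R.
      + apply (is_derive_scal (fun t => Rpower (c - t) (-2 - a))), is_derive_Rpower_sub. lra.
      + replace (-2 - a - 1) with (-3 - a) by ring. simpl. unfold mult; simpl. ring.
    - intros t Ht. apply Rmult_le_pos; [lra|]. apply Rmult_le_pos; [lra | apply Rlt_le, Rpower_pos]. }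
  assert (HK : forall t, p <= t <= q -> continuous K t) by (intros; apply continuous_Rpower_sub; lra).
  apply Rle_trans with (RInt (fun t => (t - p) * (q - t) * (((q - t) * K p + (t - p) * K q) / L)) p q).
  - apply RInt_le; [lra | apply ex_RInt_continuous_le; [lra|]; intros; continuity_R; now apply HK
                    | apply ex_RInt_continuous_le; [lra|]; intros; unfold Rdiv; continuity_R |].
    intros t Ht. apply Rmult_le_compat_l; [apply Rmult_le_pos; lra|].
    apply Rmult_le_reg_r with L; [unfold L; lra|].
    unfold Rdiv. rewrite Rmult_assoc, Rinv_l, Rmult_1_r by (unfold L; lra).
    rewrite Rmult_comm. apply Hchord. lra.
  - apply Req_le. clearbody K. set (A := K p). set (B := K q). clearbody A B.
    rewrite (RInt_derive_R (fun t =>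
               A / L * (L * L * ((t - p) ^ 2) / 2 - 2 * L * ((t - p) ^ 3) / 3 + (t - p) ^ 4 / 4)
                                  + B / L * (L * ((t - p) ^ 3) / 3 - (t - p) ^ 4 / 4))).
    + replace (q - p) with L by reflexivity. replace (p - p) with 0 by ring. eq_R. field. unfold L; lra.
    + intros t _. auto_derive; auto. unfold L. field. lra.
    + intros t _. unfold Rdiv. continuity_R.
Qed.

Definition bubble_last_const : R :=
  - (4 * Rpower 2 (- a) - 1) / (2 - a) + 3 * (2 * Rpower 2 (- a) - 1) / (1 - a)
  - 2 * (1 - Rpower 2 (- a)) / a.

(* On the last history cell the telescoping of [sum_bubble_kernel_interior_le] would reach the
   singularity at [c]; there the integral is computed exactly instead. *)
Lemma RInt_bubble_kernel_last c d : 0 < d ->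
  RInt (fun t => (t - (c - 2 * d)) * ((c - d) - t) * Rpower (c - t) (-1 - a)) (c - 2 * d) (c - d)
  = Rpower d (2 - a) * bubble_last_const.
Proof.
  intros Hd.
  set (P1 := fun t => / (2 - a) * Rpower (c - t) (2 - a)).
  set (P2 := fun t => 3 * d / (1 - a) * Rpower (c - t) (1 - a)).
  set (P3 := fun t => 2 * d * d / a * Rpower (c - t) (- a)).
  rewrite (RInt_derive_R (fun t => P1 t - P2 t - P3 t)).
  - unfold P1, P2, P3. replace (c - (c - d)) with d by ring. replace (c - (c - 2 * d)) with (2 * d) by ring.
    rewrite <- !Rpower_mult_distr by lra.
    replace (2 - a) with (- a + 1 + 1) by ring. replace (1 - a) with (- a + 1) by ring.
    rewrite !Rpower_plus_1 by lra. unfold bubble_last_const. eq_R. field. lra.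
  - intros t Ht. rewrite Rmin_left, Rmax_right in Ht by lra.
    eapply is_derive_eq_R.
    + apply (is_derive_minus (fun t => P1 t - P2 t) P3); [apply (is_derive_minus P1 P2)|];
        apply (is_derive_scal (fun t => Rpower (c - t) _)), is_derive_Rpower_sub; lra.
    + simpl. unfold minus, plus, opp, scal; simpl.
      unfold mult; simpl.
      replace (2 - a - 1) with (-1 - a + 1 + 1) by ring. replace (1 - a - 1) with (-1 - a + 1) by ring.
      replace (- a - 1) with (-1 - a) by ring. rewrite !Rpower_plus_1 by lra. field. lra.
  - intros t Ht. rewrite Rmin_left, Rmax_right in Ht by lra.
    continuity_R. apply continuous_Rpower_sub. lra.
Qed.

Lemma bubble_last_const_nonneg : 0 <= bubble_last_const.
Proof.
  assert (H := RInt_bubble_kernel_last 2 1 ltac:(lra)). rewrite Rpower_base_1, Rmult_1_l in H.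
  rewrite <- H. apply RInt_ge_0; [lra | |].
  - apply ex_RInt_continuous_le; [lra|]. intros; continuity_R. apply continuous_Rpower_sub. lra.
  - intros t Ht. apply Rmult_le_pos; [apply Rmult_le_pos; lra | apply Rlt_le, Rpower_pos].
Qed.

Let bubble_kernel h c l :=
  RInt (fun t => (t - tk h (l - 1)) * (tk h l - t) * Rpower (c - t) (-1 - a)) (tk h (l - 1)) (tk h l).

Let kernel_primitive h c j := Rpower (c - tk h j) (- a) / a.

Lemma bubble_kernel_le_increments h c l : 0 < h -> (1 <= l)%nat -> tk h (S l) < c ->
  bubble_kernel h c l <= h * h / 12 *
    ((kernel_primitive h c l - kernel_primitive h c (l - 1))
     + (kernel_primitive h c (S l) - kernel_primitive h c l)).
Proof.
  intros Hh Hl Hlc. unfold bubble_kernel, kernel_primitive.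
  assert (Hl1 := tk_pred h l Hl). assert (HlS := tk_S h l).
  eapply Rle_trans; [apply RInt_bubble_kernel_le; lra|].
  replace (tk h l - tk h (l - 1)) with h by lra.
  assert (T1 : h * Rpower (c - tk h (l - 1)) (-1 - a)
               <= Rpower (c - tk h l) (- a) / a - Rpower (c - tk h (l - 1)) (- a) / a).
  { replace (c - tk h l) with (c - tk h (l - 1) - h) by lra.
    unfold Rdiv. rewrite <- Rmult_minus_distr_r. apply Rpower_neg_increment_ge. lra. }
  assert (T2 : h * Rpower (c - tk h l) (-1 - a)
               <= Rpower (c - tk h (S l)) (- a) / a - Rpower (c - tk h l) (- a) / a).
  { rewrite HlS. replace (c - (tk h l + h)) with (c - tk h l - h) by ring.
    unfold Rdiv. rewrite <- Rmult_minus_distr_r. apply Rpower_neg_increment_ge. lra. }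
  replace (h ^ 3 / 12 * (Rpower (c - tk h (l - 1)) (-1 - a) + Rpower (c - tk h l) (-1 - a)))
    with (h * h / 12 * (h * Rpower (c - tk h (l - 1)) (-1 - a) + h * Rpower (c - tk h l) (-1 - a)))
    by field.
  apply Rmult_le_compat_l; [apply Rmult_le_pos; [apply Rmult_le_pos|]; lra | lra].
Qed.

(* The increments of [kernel_primitive] telescope; the largest remaining terms are at the two
   cells nearest to [c]. *)
Lemma sum_bubble_kernel_interior_le h k : 0 < h ->
  sumk 1 k (bubble_kernel h (tk h (S (S k)))) <= Rpower h (2 - a) / (6 * a).
Proof.
  intros Hh. set (c := tk h (S (S k))). set (Rj := kernel_primitive h c).
  assert (Hcell : forall l, (1 <= l <= k)%nat ->
    bubble_kernel h c l <= h * h / 12 * ((Rj l - Rj (l - 1)%nat) + (Rj (S l) - Rj l)))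
    by (intros; apply bubble_kernel_le_increments; [lra | lia | apply tk_lt; [lra | lia]]).
  eapply Rle_trans; [apply sumk_le, Hcell|].
  rewrite sumk_scal, sumk_plus, sumk_telescope.
  rewrite (sumk_ext k (fun l => Rj (S l) - Rj l) (fun l => Rj (S l) - Rj (S (l - 1)))) by
    (intros l Hl; now replace (S (l - 1)) with l by lia).
  rewrite (sumk_telescope k (fun j => Rj (S j))).
  assert (HR : forall j, 0 <= Rj j) by (intros; apply Rlt_le, Rdiv_lt_0_compat; [apply Rpower_pos | lra]).
  assert (Hc : c = tk h k + 2 * h) by (unfold c; rewrite !tk_S; ring).
  assert (HRk : Rj k <= Rpower h (- a) / a).
  { unfold Rj, kernel_primitive, Rdiv. apply Rmult_le_compat_r; [apply Rlt_le, Rinv_0_lt_compat; lra|].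
    apply Rpower_le_Rpower_neg; lra. }
  assert (HRk1 : Rj (S k) = Rpower h (- a) / a) by (unfold Rj, kernel_primitive; rewrite Hc, tk_S; f_equal; f_equal; ring).
  assert (R0 := HR 0%nat). assert (R1 := HR 1%nat).
  replace (Rpower h (2 - a)) with (h * h * Rpower h (- a))
    by (replace (2 - a) with (- a + 1 + 1) by ring; rewrite !Rpower_plus_1 by lra; ring).
  apply Rle_trans with (h * h / 12 * (2 * (Rpower h (- a) / a))).
  - apply Rmult_le_compat_l; [apply Rmult_le_pos; [apply Rmult_le_pos|]; lra | lra].
  - apply Req_le. field. lra.
Qed.

Lemma sum_bubble_kernel_le h m : 0 < h ->
  sumk 1 m (bubble_kernel h (tk h (S m))) <= Rpower h (2 - a) * (bubble_last_const + / (6 * a)).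
Proof.
  intros Hh. assert (HJ := bubble_last_const_nonneg).
  assert (Hpa : 0 < / (6 * a)) by (apply Rinv_0_lt_compat; lra).
  assert (Hph := Rpower_pos h (2 - a)).
  destruct m as [|k]; [rewrite sumk_0; apply Rmult_le_pos; lra|].
  assert (Hlast : bubble_kernel h (tk h (S (S k))) (S k) = Rpower h (2 - a) * bubble_last_const).
  { unfold bubble_kernel. replace (S k - 1)%nat with k by lia.
    assert (E1 : tk h (S k) = tk h (S (S k)) - h) by (rewrite (tk_S h (S k)); ring).
    assert (E0 : tk h k = tk h (S (S k)) - 2 * h) by (rewrite !tk_S; ring).
    rewrite E1, E0. apply RInt_bubble_kernel_last; lra. }
  rewrite sumk_S, Hlast.
  assert (Hint := sum_bubble_kernel_interior_le h k Hh). unfold Rdiv in Hint. nra.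
Qed.

End Kernel.

(** * The history part *)

Lemma RInt_history_parts (a c x y : R) (u : R -> R) : 0 < a -> x <= y < c ->
  (forall t, x <= t <= y -> ex_derive u t /\ continuous (Derive u) t) ->
  RInt (fun t => Derive u t / Rpower (c - t) a) x y
  = u y * Rpower (c - y) (- a) - u x * Rpower (c - x) (- a)
    - a * RInt (fun t => u t * Rpower (c - t) (-1 - a)) x y.
Proof.
  intros Ha Hxy Hu.
  assert (Hcu : forall t, x <= t <= y -> continuous u t)
    by (intros; apply (ex_derive_continuous (V := R_NormedModule)), Hu; lra).
  assert (Hcu1 : forall t, x <= t <= y -> continuous (Derive u) t) by (intros; apply Hu; lra).
  assert (HuK : ex_RInt (fun t => u t * Rpower (c - t) (-1 - a)) x y).
  { apply ex_RInt_continuous_le; [lra|]. intros.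
    apply continuous_mult_R; [apply Hcu; lra | apply continuous_Rpower_sub; lra]. }
  assert (Hg : ex_RInt (fun t => Derive u t / Rpower (c - t) a) x y).
  { apply ex_RInt_continuous_le; [lra|]. intros. unfold Rdiv.
    apply continuous_mult_R; [apply Hcu1 | apply continuous_Rinv_Rpower_sub]; lra. }
  assert (Hd : forall t, Rmin x y <= t <= Rmax x y -> is_derive (fun t => u t * Rpower (c - t) (- a)) t
            (Derive u t / Rpower (c - t) a + a * (u t * Rpower (c - t) (-1 - a)))).
  { intros t Ht. rewrite Rmin_left, Rmax_right in Ht by lra. eapply is_derive_eq_R.
    - apply (is_derive_mult u (fun t => Rpower (c - t) (- a)));
        [apply Derive_correct, Hu; lra | apply is_derive_Rpower_sub; lra | intros; apply Rmult_comm].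
    - simpl. unfold plus, mult; simpl. rewrite Rpower_Ropp. replace (- a - 1) with (-1 - a) by ring.
      field. apply Rgt_not_eq, Rpower_pos. }
  assert (Hc : forall t, Rmin x y <= t <= Rmax x y ->
            continuous (fun t => Derive u t / Rpower (c - t) a + a * (u t * Rpower (c - t) (-1 - a))) t).
  { intros t Ht. rewrite Rmin_left, Rmax_right in Ht by lra. unfold Rdiv.
    assert (C0 := Hcu t Ht). assert (C1 := Hcu1 t Ht).
    assert (C2 := continuous_Rpower_sub c (-1 - a) t ltac:(lra)).
    assert (C3 := continuous_Rinv_Rpower_sub c a t ltac:(lra)).
    continuity_R; assumption. }
  assert (H := RInt_derive_R _ _ x y Hd Hc).
  rewrite RInt_plus_R, RInt_scal_R in H by (auto; now apply ex_RInt_scal_R).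
  cbv beta in H. eq_R. lra.
Qed.

Lemma continuous_Pi1 h uk l t : continuous (Pi1 h uk l) t.
Proof. unfold Pi1, Rdiv. continuity_R. Qed.

Lemma sum_Ui_eq h Nexp (s omega uk : nat -> R) m :
  sumk 1 Nexp (fun i => omega i * Ui h (s i) uk (S m))
  = sumk 1 m (fun l => RInt (fun t => sumk 1 Nexp (fun i => omega i * exp (- s i * (tk h (S m) - t)))
                                      * Pi1 h uk l t) (tk h (l - 1)) (tk h l)).
Proof.
  unfold Ui. replace (S m - 1)%nat with m by lia.
  set (f := fun i l t => omega i * (exp (- s i * (tk h (S m) - t)) * Pi1 h uk l t)).
  assert (Hex : forall i l, ex_RInt (f i l) (tk h (l - 1)) (tk h l)).
  { intros i l. apply (ex_RInt_continuous (V := R_CompleteNormedModule)). intros t _.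
    unfold f. continuity_R. apply continuous_Pi1. }
  rewrite (sumk_ext Nexp _ (fun i => sumk 1 m (fun l => RInt (f i l) (tk h (l - 1)) (tk h l)))).
  2: { intros i _. rewrite <- sumk_scal. apply sumk_ext. intros l _. unfold f. symmetry.
       apply RInt_scal_R. apply (ex_RInt_continuous (V := R_CompleteNormedModule)). intros t _.
       continuity_R. apply continuous_Pi1. }
  rewrite sumk_swap. apply sumk_ext. intros l _.
  destruct (RInt_sumk Nexp (fun i => f i l) (tk h (l - 1)) (tk h l) (fun i _ => Hex i l)) as [_ <-].
  apply RInt_ext. intros t _. unfold f. rewrite <- sumk_scal_r. apply sumk_ext. intros; ring.
Qed.

Lemma Pi1_abs_le h l (u : R -> R) M0 t : 0 < h -> (1 <= l)%nat -> tk h (l - 1) <= t <= tk h l ->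
  (forall t, tk h (l - 1) <= t <= tk h l -> Rabs (u t) <= M0) ->
  Rabs (Pi1 h (fun k => u (tk h k)) l t) <= M0.
Proof.
  intros Hh Hl Ht HM0. assert (Hq := tk_pred h l Hl).
  unfold Pi1. set (p := tk h (l - 1)) in *. set (q := tk h l) in *.
  replace (u p * (q - t) / h + u q * (t - p) / h) with ((q - t) / h * u p + (t - p) / h * u q)
    by (field; lra).
  assert (Hc1 : 0 <= (q - t) / h) by (apply Rdiv_le_0_compat; lra).
  assert (Hc2 : 0 <= (t - p) / h) by (apply Rdiv_le_0_compat; lra).
  eapply Rle_trans; [apply Rabs_triang|].
  rewrite !Rabs_mult, (Rabs_pos_eq ((q - t) / h)), (Rabs_pos_eq ((t - p) / h)) by auto.
  assert (Rabs (u p) <= M0) by (apply HM0; lra). assert (Rabs (u q) <= M0) by (apply HM0; lra).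
  apply Rle_trans with ((q - t) / h * M0 + (t - p) / h * M0);
    [apply Rplus_le_compat; apply Rmult_le_compat_l; auto|].
  apply Req_le. replace (t - p) with (h - (q - t)) by lra. field. lra.
Qed.

Lemma Pi1_interp_error h l (u : R -> R) M2 t :
  0 < h -> (1 <= l)%nat -> tk h (l - 1) <= t <= tk h l ->
  (forall t, tk h (l - 1) <= t <= tk h l -> ex_derive u t /\ ex_derive (Derive u) t) ->
  (forall t, tk h (l - 1) <= t <= tk h l -> Rabs (Derive_n u 2 t) <= M2) ->
  Rabs (u t - Pi1 h (fun k => u (tk h k)) l t) <= M2 / 2 * ((t - tk h (l - 1)) * (tk h l - t)).
Proof.
  intros Hh Hl Ht Hu HM2. assert (Hq := tk_pred h l Hl).
  assert (HI := linear_interp_error u (Derive u) (Derive_n u 2) _ _ M2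
                  (fun x Hx => Derive_correct _ _ (proj1 (Hu x Hx)))
                  (fun x Hx => Derive_correct _ _ (proj2 (Hu x Hx))) HM2 t Ht).
  unfold Pi1. set (p := tk h (l - 1)) in *. set (q := tk h l) in *.
  replace (q - p) with h in HI by lra.
  replace (u t - (u p * (q - t) / h + u q * (t - p) / h))
    with (/ h * (h * u t - ((q - t) * u p + (t - p) * u q))) by (field; lra).
  rewrite Rabs_mult, Rabs_right by (apply Rle_ge, Rlt_le, Rinv_0_lt_compat; lra).
  apply Rmult_le_reg_l with h; [lra|]. rewrite <- Rmult_assoc, Rinv_r by lra. lra.
Qed.

(* Split [u K - S Pi] as [(u - Pi) K + Pi (K - S)]: interpolation error against the kernel, plus
   the kernel-approximation error against [|Pi| <= max |u|]. *)
Lemma RInt_cell_error (a c h : R) (l : nat) (u Sk : R -> R) eps M0 M2 :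
  0 < h -> (1 <= l)%nat -> tk h l < c ->
  (forall t, tk h (l - 1) <= t <= tk h l -> ex_derive u t /\ ex_derive (Derive u) t) ->
  (forall t, tk h (l - 1) <= t <= tk h l -> Rabs (Derive_n u 2 t) <= M2) ->
  (forall t, tk h (l - 1) <= t <= tk h l -> Rabs (u t) <= M0) ->
  (forall t, continuous Sk t) ->
  (forall t, tk h (l - 1) <= t <= tk h l -> Rabs (Rpower (c - t) (-1 - a) - Sk t) <= eps) ->
  Rabs (RInt (fun t => u t * Rpower (c - t) (-1 - a)) (tk h (l - 1)) (tk h l)
        - RInt (fun t => Sk t * Pi1 h (fun k => u (tk h k)) l t) (tk h (l - 1)) (tk h l))
  <= M2 / 2 * RInt (fun t => (t - tk h (l - 1)) * (tk h l - t) * Rpower (c - t) (-1 - a))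
                   (tk h (l - 1)) (tk h l)
     + h * (eps * M0).
Proof.
  intros Hh Hl Hlc Hu HM2 HM0 HS Happrox.
  assert (Hq := tk_pred h l Hl).
  assert (HPi_bound := fun t Ht => Pi1_abs_le h l u M0 t Hh Hl Ht HM0).
  assert (Hinterp := fun t Ht => Pi1_interp_error h l u M2 t Hh Hl Ht Hu HM2).
  set (p := tk h (l - 1)) in *. set (q := tk h l) in *.
  set (K := fun t => Rpower (c - t) (-1 - a)). set (Pi := Pi1 h (fun k => u (tk h k)) l) in *.
  assert (HKc : forall t, p <= t <= q -> continuous K t) by (intros; apply continuous_Rpower_sub; lra).
  assert (HKpos : forall t, 0 <= K t) by (intros; apply Rlt_le, Rpower_pos).
  assert (Hcu : forall t, p <= t <= q -> continuous u t)
    by (intros; apply (ex_derive_continuous (V := R_NormedModule)), Hu; lra).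
  assert (HPi : forall t, continuous Pi t) by (intros; apply continuous_Pi1).
  assert (Hex : forall f : R -> R, (forall t, p <= t <= q -> continuous f t) -> ex_RInt f p q)
    by (intros; apply ex_RInt_continuous_le; [lra | auto]).
  assert (Hbubble : ex_RInt (fun t => (t - p) * (q - t) * K t) p q)
    by (apply Hex; intros; apply continuous_mult_R; [continuity_R | auto]).
  rewrite <- RInt_minus_R by (apply Hex; intros; apply continuous_mult_R; auto).
  rewrite (RInt_ext _ (fun t => (u t - Pi t) * K t + Pi t * (K t - Sk t)))
    by (intros; unfold K, Pi; eq_R; ring).
  rewrite RInt_plus_R by (apply Hex; intros; continuity_R; auto).
  eapply Rle_trans; [apply Rabs_triang|]. apply Rplus_le_compat.
  - eapply Rle_trans; [apply abs_RInt_le; [lra | apply Hex; intros; continuity_R; auto]|].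
    rewrite <- (RInt_scal_R _ _ _ _ Hbubble).
    apply RInt_le; [lra | apply Hex; intros; apply continuous_Rabs_comp; continuity_R; auto
                   | now apply ex_RInt_scal_R |].
    intros t Ht. rewrite Rabs_mult, (Rabs_right (K t)) by (apply Rle_ge, HKpos).
    rewrite <- Rmult_assoc. apply Rmult_le_compat_r; [apply HKpos|].
    apply Hinterp; lra.
  - replace h with (q - p) at 1 by lra.
    apply abs_RInt_le_const; [lra | apply Hex; intros; continuity_R; auto |].
    intros t Ht. rewrite Rabs_mult, (Rmult_comm eps M0).
    apply Rmult_le_compat; [apply Rabs_pos | apply Rabs_pos | apply HPi_bound | apply Happrox]; lra.
Qed.

Lemma history_error (a h : R) m (u Sk : R -> R) eps M0 M2 :
  0 < a < 1 -> 0 < h ->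
  (forall t, 0 <= t <= tk h m -> ex_derive u t /\ ex_derive (Derive u) t) ->
  (forall t, 0 <= t <= tk h m -> Rabs (Derive_n u 2 t) <= M2) ->
  (forall t, 0 <= t <= tk h m -> Rabs (u t) <= M0) ->
  (forall t, continuous Sk t) ->
  (forall t, 0 <= t <= tk h m -> Rabs (Rpower (tk h (S m) - t) (-1 - a) - Sk t) <= eps) ->
  Rabs (sumk 1 m (fun l =>
          RInt (fun t => u t * Rpower (tk h (S m) - t) (-1 - a)) (tk h (l - 1)) (tk h l)
          - RInt (fun t => Sk t * Pi1 h (fun k => u (tk h k)) l t) (tk h (l - 1)) (tk h l)))
  <= M2 / 2 * (Rpower h (2 - a) * (bubble_last_const a + / (6 * a))) + tk h m * (eps * M0).
Proof.
  intros Ha Hh Hu HM2 HM0 HS Happrox.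
  assert (HM2pos : 0 <= M2)
    by (apply Rle_trans with (Rabs (Derive_n u 2 0));
        [apply Rabs_pos | apply HM2; split; [lra | apply tk_nonneg; lra]]).
  assert (Hcell : forall l, (1 <= l <= m)%nat ->
            tk h (l - 1) <= tk h l /\ 0 <= tk h (l - 1) /\ tk h l <= tk h m /\ tk h l < tk h (S m)).
  { intros l Hl. repeat split; [apply tk_le; [lra | lia] | apply tk_nonneg; lra
                               | apply tk_le; [lra | lia] | apply tk_lt; [lra | lia]]. }
  eapply Rle_trans; [apply sumk_abs|].
  eapply Rle_trans.
  { apply sumk_le. intros l Hl. destruct (Hcell l Hl) as [H1 [H2 [H3 H4]]].
    apply (RInt_cell_error a (tk h (S m)) h l u Sk eps M0 M2); auto; try lia;
      intros t Ht; [apply Hu | apply HM2 | apply HM0 | apply Happrox]; lra. }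
  rewrite sumk_plus, sumk_scal, sumk_const. apply Rplus_le_compat.
  - apply Rmult_le_compat_l; [lra|]. now apply sum_bubble_kernel_le.
  - unfold tk. right. ring.
Qed.

Lemma caputo_split (a c p : R) (u : R -> R) : 0 < a < 1 -> 0 <= p < c ->
  (forall t, 0 <= t <= c -> ex_derive u t /\ ex_derive (Derive u) t /\ continuous (Derive_n u 2) t) ->
  caputo a u c = / Gamma (1 - a) * (RInt (fun t => Derive u t / Rpower (c - t) a) 0 p
                                     + caputo_last_cell a p c u).
Proof.
  intros Ha Hp Hu. unfold caputo. f_equal.
  apply (is_RInt_gen_unique (V := R_CompleteNormedModule)).
  assert (Hhist : is_RInt_gen (fun t => Derive u t / Rpower (c - t) a) (at_point 0) (at_point p)
                    (RInt (fun t => Derive u t / Rpower (c - t) a) 0 p)).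
  { apply is_RInt_gen_at_point, (RInt_correct (V := R_CompleteNormedModule)).
    apply ex_RInt_continuous_le; [lra|]. intros t Ht. unfold Rdiv.
    apply continuous_mult_R;
      [apply (ex_derive_continuous (V := R_NormedModule)), Hu | apply continuous_Rinv_Rpower_sub]; lra. }
  assert (Hlast := is_RInt_gen_last_cell a p c u Ha ltac:(lra) ltac:(intros; apply Hu; lra)).
  exact (is_RInt_gen_Chasles _ p _ _ Hhist Hlast).
Qed.

(** * The error of the fast approximation *)

Lemma caputo_minus_fast_caputo (a h : R) m Nexp (s omega : nat -> R) (u : R -> R) :
  0 < a < 1 -> 0 < h ->
  (forall t, 0 <= t <= tk h (S m) ->
     ex_derive u t /\ ex_derive (Derive u) t /\ continuous (Derive_n u 2) t) ->
  caputo a u (tk h (S m)) - fast_caputo a h Nexp s omega (fun k => u (tk h k)) (S m)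
  = / Gamma (1 - a) *
    ((caputo_last_cell a (tk h m) (tk h (S m)) u
      - (u (tk h (S m)) - u (tk h m)) / (Rpower h a * (1 - a)))
     - a * sumk 1 m (fun l =>
             RInt (fun t => u t * Rpower (tk h (S m) - t) (-1 - a)) (tk h (l - 1)) (tk h l)
             - RInt (fun t => sumk 1 Nexp (fun i => omega i * exp (- s i * (tk h (S m) - t)))
                              * Pi1 h (fun k => u (tk h k)) l t) (tk h (l - 1)) (tk h l))).
Proof.
  intros Ha Hh Hu.
  assert (Hm := tk_S h m). assert (Hm0 := tk_nonneg h m (Rlt_le _ _ Hh)).
  assert (HG := proj1 (Gamma_spec (1 - a) ltac:(lra))).
  rewrite (caputo_split a (tk h (S m)) (tk h m) u Ha ltac:(lra) Hu).
  rewrite (RInt_history_parts a (tk h (S m)) 0 (tk h m) u ltac:(lra) ltac:(lra))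
    by (intros; split; [apply Hu | apply (ex_derive_continuous (V := R_NormedModule)), Hu]; lra).
  rewrite (RInt_grid_sum _ h m Hh)
    by (intros; apply continuous_mult_R;
        [apply (ex_derive_continuous (V := R_NormedModule)), Hu | apply continuous_Rpower_sub]; lra).
  unfold fast_caputo. replace (S m - 1)%nat with m by lia.
  rewrite sum_Ui_eq, sumk_minus, tk_0.
  replace (2 - a) with (1 - a + 1) by ring. rewrite Gamma_succ by lra.
  replace (tk h (S m) - tk h m) with h by lra. replace (tk h (S m) - 0) with (tk h (S m)) by ring.
  rewrite !Rpower_Ropp. field.
  repeat split; try lra; apply Rgt_not_eq; try apply Rpower_pos; exact HG.
Qed.

Lemma fast_caputo_error_constant a : 0 < a < 1 ->
  (/ (2 - a) - / 2) / (1 - a) + a / 2 * (bubble_last_const a + / (6 * a))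
  = ((1 - a) / 12 + Rpower 2 (2 - a) / (2 - a) - (1 + Rpower 2 (- a))) / (1 - a).
Proof.
  intros Ha. unfold bubble_last_const.
  replace (2 - a) with (- a + 1 + 1) at 3 by ring. rewrite !Rpower_plus_1 by lra.
  field. lra.
Qed.

Lemma fast_caputo_error (a h eps : R) m Nexp (s omega : nat -> R) (u : R -> R) :
  0 < a < 1 -> 0 < h ->
  (forall t, h <= t <= tk h (S m) ->
     Rabs (Rpower t (-1 - a) - sumk 1 Nexp (fun i => omega i * exp (- s i * t))) <= eps) ->
  (forall t, 0 <= t <= tk h (S m) ->
     ex_derive u t /\ ex_derive (Derive u) t /\ continuous (Derive_n u 2) t) ->
  Rabs (caputo a u (tk h (S m)) - fast_caputo a h Nexp s omega (fun k => u (tk h k)) (S m))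
  <= Rpower h (2 - a) / Gamma (2 - a)
       * ((1 - a) / 12 + Rpower 2 (2 - a) / (2 - a) - (1 + Rpower 2 (- a)))
       * max_abs (Derive_n u 2) 0 (tk h (S m))
     + a * eps * tk h m / Gamma (1 - a) * max_abs u 0 (tk h m).
Proof.
  intros Ha Hh Hsoe Hu.
  assert (Hm := tk_S h m). assert (Hm0 := tk_nonneg h m (Rlt_le _ _ Hh)).
  assert (HG := proj1 (Gamma_spec (1 - a) ltac:(lra))).
  set (M2 := max_abs (Derive_n u 2) 0 (tk h (S m))). set (M0 := max_abs u 0 (tk h m)).
  assert (Hcu : forall t, 0 <= t <= tk h (S m) -> continuous u t)
    by (intros; apply (ex_derive_continuous (V := R_NormedModule)), Hu; lra).
  assert (HM2 : forall t, 0 <= t <= tk h (S m) -> Rabs (Derive_n u 2 t) <= M2)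
    by (intros; apply max_abs_ge; [lra | intros; apply Hu; lra | lra]).
  assert (HM0 : forall t, 0 <= t <= tk h m -> Rabs (u t) <= M0)
    by (intros; apply max_abs_ge; [lra | intros; apply Hcu; lra | lra]).
  assert (Hlocal := caputo_last_cell_error a (tk h m) (tk h (S m)) u Ha ltac:(lra)
                      ltac:(intros; apply Hu; lra) M2 ltac:(intros; apply HM2; lra)).
  assert (Hhist := history_error a h m u
                     (fun t => sumk 1 Nexp (fun i => omega i * exp (- s i * (tk h (S m) - t))))
                     eps M0 M2 Ha Hh ltac:(intros; split; apply Hu; lra)
                     ltac:(intros; apply HM2; lra) HM0
                     ltac:(intros; apply continuous_sumk; intros; continuity_R)
                     ltac:(intros; apply Hsoe; lra)).
  replace (tk h (S m) - tk h m) with h in Hlocal by lra.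
  rewrite caputo_minus_fast_caputo by auto.
  rewrite Rabs_mult, Rabs_right by (apply Rle_ge, Rlt_le, Rinv_0_lt_compat; exact HG).
  replace (2 - a) with (1 - a + 1) by ring. rewrite Gamma_succ by lra.
  replace (1 - a + 1) with (2 - a) by ring.
  eapply Rle_trans.
  { apply Rmult_le_compat_l; [apply Rlt_le, Rinv_0_lt_compat; exact HG|].
    eapply Rle_trans; [apply Rabs_triang|]. rewrite Rabs_Ropp, Rabs_mult, (Rabs_right a) by lra.
    apply Rplus_le_compat; [exact Hlocal | apply Rmult_le_compat_l; [lra | exact Hhist]]. }
  apply Req_le.
  replace ((1 - a) / 12 + Rpower 2 (2 - a) / (2 - a) - (1 + Rpower 2 (- a)))
    with ((1 - a) * ((/ (2 - a) - / 2) / (1 - a) + a / 2 * (bubble_last_const a + / (6 * a))))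
    by (rewrite fast_caputo_error_constant by lra; field; lra).
  field. repeat split; try lra; apply Rgt_not_eq; exact HG.
Qed.

Theorem lemma2p7
  (alpha T : R) (NT : nat) (eps : R) (Nexp : nat) (s omega : nat -> R)
  (n : nat) (u : R -> R) :
  0 < alpha < 1 -> 0 < T -> (0 < NT)%nat -> 0 < eps ->
  (forall i, (1 <= i <= Nexp)%nat -> 0 < s i /\ 0 < omega i) ->
  (forall t, T / INR NT <= t <= T ->
     Rabs (Rpower t (-1 - alpha)
           - sumk 1 Nexp (fun i => omega i * exp (- s i * t))) <= eps) ->
  (1 <= n <= NT)%nat ->
  (* u in C^2[0, t_n] *)
  (forall t, 0 <= t <= tk (T / INR NT) n ->
     ex_derive u t /\ ex_derive (Derive u) t /\ continuous (Derive_n u 2) t) ->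
  let dt := T / INR NT in
  let uk := fun k => u (tk dt k) in
  Rabs (caputo alpha u (tk dt n) - fast_caputo alpha dt Nexp s omega uk n)
  <= Rpower dt (2 - alpha) / Gamma (2 - alpha)
       * ((1 - alpha) / 12 + Rpower 2 (2 - alpha) / (2 - alpha)
          - (1 + Rpower 2 (- alpha)))
       * max_abs (Derive_n u 2) 0 (tk dt n)
     + alpha * eps * tk dt (n - 1) / Gamma (1 - alpha)
       * max_abs u 0 (tk dt (n - 1)).
Proof.
  intros Ha HT HNT _ _ Hsoe Hn Hu dt uk.
  destruct n as [|m]; [lia|]. replace (S m - 1)%nat with m by lia.
  assert (HNT' : 0 < INR NT) by (apply lt_0_INR; lia).
  assert (Hdt : 0 < dt) by (apply Rdiv_lt_0_compat; lra).
  assert (HtnT : tk dt (S m) <= T).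
  { unfold tk, dt. replace T with (INR NT * (T / INR NT)) at 2 by (field; lra).
    apply Rmult_le_compat_r; [apply Rlt_le, Hdt | apply le_INR; lia]. }
  apply fast_caputo_error; auto.
  intros t Ht. apply Hsoe. split; [apply Ht | lra].
Qed.
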